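(* Assume (C1)–(C4). Define the set-valued map $G$ on $[0,1]\times\mathbb R^n$ by $$G(t,y)=\left\{\left(\frac{\rho}{L(t,y,w)+\beta},\;\frac{\rho\, g(t,y)w}{L(t,y,w)+\beta}\right)\in\mathbb R\times\mathbb R^n:\ w\in\mathbb R^m,\ \rho\in[0,1]\right\}.$$ Then $G(t,y)$ is a nonempty convex compact set for every $(t,y)$, and $G$ is Lipschitz continuous (with respect to the Hausdorff distance) on $\Omega$.
   Context: Let $n,m\ge1$; $|\cdot|$ denotes the Euclidean norm (operator norm for matrices) and $B_n$ the closed unit ball of $\mathbb R^n$. Let $L:[0,1]\times\mathbb R^n\times\mathbb R^m\to\mathbb R$ and $g:[0,1]\times\mathbb R^n\to\mathbb R^{n\times m}$ be continuously differentiable. (C1) there is a function $\theta:[0,\infty)\to\mathbb R$ with $L(t,x,u)\ge\theta(|u|)>0$ for all $t,x,u$ and $\lim_{r\to\infty}r/\theta(r)=0$; (C2) there is $\mu>0$ with $L(t,x,u)+\langle\nabla_uL(t,x,u),v-u\rangle+\frac{\mu}{2}|v-u|^2\le L(t,x,v)$ for all $t,x,u,v$; (C3) there are constants $\xi>0,\delta>0$ with $|\nabla_{(t,x)}L(t,x,u)|\,|g(t,x)u|\le\xi L(t,x,u)+\delta$ for all $t,x,u$; (C4) there are constants $c_g>0$, $c_{\nabla g}>0$ with $|g(t,x)|\le c_g$ and $|\nabla_{(t,x)}g(t,x)|\le c_{\nabla g}$ for all $t,x$. Constants: fix $r_0>0$ such that $\theta(r)\ge r$ for all $r\ge r_0$;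 $c=r_0+\int_0^1L(t,0,0)\,dt$; $\Omega=[0,1]\times c_g c\,B_n$; $\sigma(r)=\max_{(t,x)\in\Omega,\,|u|\le r}\big(\langle\nabla_uL(t,x,u),u\rangle-L(t,x,u)\big)$; fix $T_0\in(0,1)$ such that $\beta:=\sigma((c+1)/T_0)>\delta/\xi$. *)

From Stdlib Require Import Reals.
From mathcomp Require Import all_boot.
Set Implicit Arguments.
Unset Strict Implicit.
Unset Printing Implicit Defensive.
Open Scope R_scope.

Definition vec (n : nat) := 'I_n -> R.
Definition mat (n m : nat) := 'I_n -> 'I_m -> R.

Definition vsum (n : nat) (f : 'I_n -> R) : R := \big[Rplus/0]_(i < n) f i.
Definition dot (n : nat) (u v : vec n) : R := vsum (fun i => u i * v i).
Definition vnorm (n : nat) (u : vec n) : R := sqrt (dot u u).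
Definition vzero (n : nat) : vec n := fun _ => 0.
Definition vsub (n : nat) (u v : vec n) : vec n := fun i => u i - v i.
Definition mulmv (n m : nat) (A : mat n m) (w : vec m) : vec n :=
  fun i => vsum (fun j => A i j * w j).
Definition msub (n m : nat) (A B : mat n m) : mat n m := fun i j => A i j - B i j.
(* Frobenius norm (used only for differentiability/continuity of g, where
   the choice of norm is immaterial) *)
Definition mfrob (n m : nat) (A : mat n m) : R :=
  sqrt (vsum (fun i => vsum (fun j => A i j * A i j))).
(* operator norm bound:  |A| <= K  (|A| = sup_{|w|<=1} |A w|), unfolded *)
Definition opnorm_le (n m : nat) (A : mat n m) (K : R) : Prop :=
  forall w : vec m, vnorm (mulmv A w) <= K * vnorm w.

Definition dist3 (n m : nat) (t : R) (x : vec n) (u : vec m)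
  (s : R) (y : vec n) (v : vec m) : R :=
  sqrt ((s - t) * (s - t) + dot (vsub y x) (vsub y x) + dot (vsub v u) (vsub v u)).
Definition dist2 (n : nat) (t : R) (x : vec n) (s : R) (y : vec n) : R :=
  sqrt ((s - t) * (s - t) + dot (vsub y x) (vsub y x)).

Definition in01 (t : R) : Prop := 0 <= t <= 1.

Definition L_frechet (n m : nat) (L : R -> vec n -> vec m -> R)
  (Lt : R -> vec n -> vec m -> R) (Lx : R -> vec n -> vec m -> vec n)
  (Lu : R -> vec n -> vec m -> vec m) (t : R) (x : vec n) (u : vec m) : Prop :=
  forall eps, 0 < eps -> exists d, 0 < d /\
    forall s y v, dist3 t x u s y v < d ->
      Rabs (L s y v - L t x u
            - (Lt t x u * (s - t) + dot (Lx t x u) (vsub y x) + dot (Lu t x u) (vsub v u)))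
      <= eps * dist3 t x u s y v.

Definition cont3 (n m k : nat) (F : R -> vec n -> vec m -> vec k) : Prop :=
  forall t x u, in01 t -> forall eps, 0 < eps -> exists d, 0 < d /\
    forall s y v, in01 s -> dist3 t x u s y v < d ->
      vnorm (vsub (F s y v) (F t x u)) < eps.
Definition cont3R (n m : nat) (F : R -> vec n -> vec m -> R) : Prop :=
  forall t x u, in01 t -> forall eps, 0 < eps -> exists d, 0 < d /\
    forall s y v, in01 s -> dist3 t x u s y v < d -> Rabs (F s y v - F t x u) < eps.

Definition L_C1 (n m : nat) (L : R -> vec n -> vec m -> R)
  (Lt : R -> vec n -> vec m -> R) (Lx : R -> vec n -> vec m -> vec n)
  (Lu : R -> vec n -> vec m -> vec m) : Prop :=
  (forall t x u, in01 t -> L_frechet L Lt Lx Lu t x u) /\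
  cont3R Lt /\ cont3 Lx /\ cont3 Lu.

Definition Dg (n m : nat) (gt : R -> vec n -> mat n m)
  (gx : R -> vec n -> 'I_n -> mat n m) (t : R) (x : vec n) (ht : R) (hx : vec n)
  : mat n m :=
  fun i j => ht * gt t x i j + vsum (fun k => hx k * gx t x k i j).

Definition g_C1 (n m : nat) (g : R -> vec n -> mat n m)
  (gt : R -> vec n -> mat n m) (gx : R -> vec n -> 'I_n -> mat n m) : Prop :=
  (forall t x, in01 t -> forall eps, 0 < eps -> exists d, 0 < d /\
     forall s y, dist2 t x s y < d ->
       mfrob (msub (msub (g s y) (g t x)) (Dg gt gx t x (s - t) (vsub y x)))
       <= eps * dist2 t x s y) /\
  (forall t x, in01 t -> forall eps, 0 < eps -> exists d, 0 < d /\
     forall s y, in01 s -> dist2 t x s y < d ->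
       mfrob (msub (gt s y) (gt t x)) < eps /\
       forall k, mfrob (msub (gx s y k) (gx t x k)) < eps).

Definition pt (n : nat) := (R * vec n)%type.
Definition pdist (n : nat) (p q : pt n) : R := dist2 p.1 p.2 q.1 q.2.

Definition open_set (n : nat) (U : pt n -> Prop) : Prop :=
  forall p, U p -> exists e, 0 < e /\ forall q, pdist p q < e -> U q.

Definition compact_set (n : nat) (K : pt n -> Prop) : Prop :=
  forall (I : Type) (U : I -> pt n -> Prop),
    (forall i, open_set (U i)) ->
    (forall p, K p -> exists i, U i p) ->
    exists l : list I, forall p, K p -> exists i, List.In i l /\ U i p.

Definition convex_set (n : nat) (K : pt n -> Prop) : Prop :=
  forall p q lam, K p -> K q -> 0 <= lam <= 1 ->
    K (lam * p.1 + (1 - lam) * q.1, fun i => lam * p.2 i + (1 - lam) * q.2 i).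

Definition nonempty_set (n : nat) (K : pt n -> Prop) : Prop := exists p, K p.

(* Hausdorff distance d_H(A,B) <= r, i.e.
   sup_{a in A} inf_{b in B} |a-b| <= r  and  sup_{b in B} inf_{a in A} |a-b| <= r *)
Definition hausdorff_le (n : nat) (A B : pt n -> Prop) (r : R) : Prop :=
  (forall a, A a -> forall eps, 0 < eps -> exists b, B b /\ pdist a b < r + eps) /\
  (forall b, B b -> forall eps, 0 < eps -> exists a, A a /\ pdist a b < r + eps).

Definition Gset (n m : nat) (L : R -> vec n -> vec m -> R) (g : R -> vec n -> mat n m)
  (beta : R) (t : R) (y : vec n) (p : pt n) : Prop :=
  exists (w : vec m) (rho : R), 0 <= rho <= 1 /\
    p.1 = rho / (L t y w + beta) /\
    forall i, p.2 i = rho * mulmv (g t y) w i / (L t y w + beta).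

Definition inOmega (n : nat) (cg c : R) (t : R) (y : vec n) : Prop :=
  in01 t /\ vnorm y <= cg * c.

From HB Require Import structures.
From Stdlib Require Import Reals Lra Psatz FunctionalExtensionality ClassicalEpsilon Classical.
From mathcomp Require Import all_boot.
Open Scope R_scope.
Set Implicit Arguments.
Unset Strict Implicit.

(** It is convex because L is convex in the control: a convex combination of two points of G(t, y)
   is the point of the barycentric control with a smaller rho.  It is compact because, by the
   superlinear growth (C1), the points with a large control lie close to the origin, while the
   others form a continuous image of [0, 1] x (a cube).

   For the Lipschitz estimate, a point of G(t, y) given by (rho, w) is matched with a point of
   G(s, z).  If rho (L(s, z, w) + beta) <= L(t, y, w) + beta, rescaling rho keeps the first
   coordinate.  If |w| is bounded, (rho, w) itself works, by the Lipschitz bounds of L and g on the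
   compact part of Omega.  For large |w|, if |g(t, y) w| is small relative to the distance, the
   control 0 works; if it is large, then |g w| stays large along the segment, (C3) bounds the
   (t, x)-gradient of L there, so L(s, z, w) exceeds L(t, y, w) by a bounded amount, and a convex
   combination of the points of G(s, z) given by (1, w) and (1, 0) works. *)

(** * Vectors and matrices *)

(* [vsum] is [\big[Rplus/0]]; this makes the generic bigop lemmas available for it. *)
HB.instance Definition _ := Monoid.isComLaw.Build R 0 Rplus
  (fun a b c => esym (Rplus_assoc a b c)) Rplus_comm Rplus_0_l.

Lemma vsum_ext k (f g : 'I_k -> R) : (forall i, f i = g i) -> vsum f = vsum g.
Proof. by move=> fg; apply: eq_bigr => i _. Qed.

Lemma vsum_add k (f g : 'I_k -> R) : vsum (fun i => f i + g i) = vsum f + vsum g.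
Proof. exact: big_split. Qed.

Lemma vsum_scal k c (f : 'I_k -> R) : vsum (fun i => c * f i) = c * vsum f.
Proof.
by apply: (big_ind2 (fun a b => a = c * b)) => [|a1 a2 b1 b2 -> ->|]; [ring|ring|].
Qed.

Lemma vsum_sub k (f g : 'I_k -> R) : vsum (fun i => f i - g i) = vsum f - vsum g.
Proof.
rewrite (vsum_ext (g := fun i => f i + -1 * g i)) => [|i]; last ring.
by rewrite vsum_add vsum_scal; ring.
Qed.

Lemma vsum_le k (f g : 'I_k -> R) : (forall i, f i <= g i) -> vsum f <= vsum g.
Proof.
move=> fg; apply: (big_ind2 (fun a b => a <= b)) => [|*|i _]; [lra|lra|exact: fg].
Qed.

Lemma vsum_ge0 k (f : 'I_k -> R) : (forall i, 0 <= f i) -> 0 <= vsum f.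
Proof.
by move=> f0; apply: (big_ind (fun a => 0 <= a)) => [|*|i _]; [lra|lra|exact: f0].
Qed.

Lemma vsum_ge_term k (f : 'I_k -> R) i : (forall j, 0 <= f j) -> f i <= vsum f.
Proof.
move=> f0; rewrite /vsum (bigD1 i) //=.
have : 0 <= \big[Rplus/0]_(j < k | j != i) f j.
  by apply: (big_ind (fun a => 0 <= a)) => [|*|j _]; [lra|lra|exact: f0].
by rewrite -{1}(Rplus_0_r (f i)); apply: Rplus_le_compat_l.
Qed.

Lemma vsum_recl k (f : 'I_k.+1 -> R) :
  vsum f = f ord0 + vsum (fun i => f (lift ord0 i)).
Proof. exact: big_ord_recl. Qed.

Lemma dot_ge0 k (u : vec k) : 0 <= dot u u.
Proof. by apply: vsum_ge0 => i; nra. Qed.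

Lemma dotC k (u v : vec k) : dot u v = dot v u.
Proof. by apply: vsum_ext => i; ring. Qed.

Lemma dot_scaler k (a u : vec k) h : dot a (fun i => h * u i) = h * dot a u.
Proof. by rewrite /dot -vsum_scal; apply: vsum_ext => i; ring. Qed.

Lemma dot_vsubxx k (a w : vec k) : dot a (vsub w w) = 0.
Proof. by rewrite /dot /vsum big1 // => i _; rewrite /vsub; ring. Qed.

Lemma vnorm_ge0 k (u : vec k) : 0 <= vnorm u.
Proof. exact: sqrt_pos. Qed.

Lemma vnorm_sqr k (u : vec k) : vnorm u * vnorm u = dot u u.
Proof. exact/sqrt_sqrt/dot_ge0. Qed.

Lemma vnorm_ext k (u v : vec k) : (forall i, u i = v i) -> vnorm u = vnorm v.
Proof. by move=> uv; rewrite (functional_extensionality _ _ uv). Qed.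

Lemma vnorm_le k (u : vec k) r : 0 <= r -> dot u u <= r * r -> vnorm u <= r.
Proof. by move=> r0 ur; rewrite -(sqrt_Rsqr r r0); apply: sqrt_le_1_alt. Qed.

Lemma vnorm0 k : vnorm (fun _ : 'I_k => 0) = 0.
Proof. by rewrite /vnorm /dot /vsum big1 ?sqrt_0 // => i _; ring. Qed.

Definition vcons k (r : R) (u : vec k) : vec k.+1 :=
  fun i => if unlift ord0 i is Some j then u j else r.

Lemma vcons0 k r (u : vec k) : vcons r u ord0 = r.
Proof. by rewrite /vcons unlift_none. Qed.

Lemma vconsS k r (u : vec k) j : vcons r u (lift ord0 j) = u j.
Proof. by rewrite /vcons liftK. Qed.

Lemma vcons_eta k (v : vec k.+1) : vcons (v ord0) (fun j => v (lift ord0 j)) = v.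
Proof. by apply: functional_extensionality => i; rewrite /vcons; case: unliftP => [j|] ->. Qed.

Lemma dot_vcons k a b (u v : vec k) : dot (vcons a u) (vcons b v) = a * b + dot u v.
Proof. by rewrite /dot vsum_recl !vcons0; congr (_ + _); apply: vsum_ext => j; rewrite !vconsS. Qed.

Lemma vsub_vcons k a b (u v : vec k) : vsub (vcons a u) (vcons b v) = vcons (a - b) (vsub u v).
Proof. by apply: functional_extensionality => i; rewrite /vsub /vcons; case: unlift. Qed.

Lemma dot_sqr_le k (u v : vec k) : dot u v * dot u v <= dot u u * dot v v.
Proof.
set a := dot v v; set b := dot u v; set c := dot u u.
have quad l : 0 <= c - 2 * l * b + l * l * a.
  have := dot_ge0 (fun i => u i - l * v i).
  have -> : dot (fun i => u i - l * v i) (fun i => u i - l * v i)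
      = c + (-2 * l) * b + (l * l) * a.
    by rewrite /c /b /a /dot -!vsum_scal -!vsum_add; apply: vsum_ext => i; ring.
  lra.
have a0 : 0 <= a by exact: dot_ge0.
case: (Rle_lt_or_eq_dec 0 a a0) => [apos|a_eq].
- have := quad (b / a).
  have -> : c - 2 * (b / a) * b + b / a * (b / a) * a = (c * a - b * b) / a by field; lra.
  move=> h; have : 0 <= (c * a - b * b) / a * a by nra.
  by rewrite /Rdiv Rmult_assoc Rinv_l; lra.
- have := quad ((c + 1) / (2 * b)); rewrite -a_eq !Rmult_0_r Rplus_0_r.
  case: (Req_dec b 0) => [->|bn0]; first lra.
  have -> : c - 2 * ((c + 1) / (2 * b)) * b = -1 by field.
  lra.
Qed.

Lemma Rabs_dot_le k (u v : vec k) : Rabs (dot u v) <= vnorm u * vnorm v.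
Proof.
rewrite /vnorm -sqrt_mult; try exact: dot_ge0.
by rewrite -sqrt_Rsqr_abs; apply/sqrt_le_1_alt/dot_sqr_le.
Qed.

Lemma dot_le k (u v : vec k) : dot u v <= vnorm u * vnorm v.
Proof. exact: Rle_trans (Rle_abs _) (Rabs_dot_le u v). Qed.

Lemma Rabs_dot_vcons_le a b k (u v : vec k) :
  Rabs (a * b + dot u v) <= sqrt (a * a + dot u u) * sqrt (b * b + dot v v).
Proof. by rewrite -!dot_vcons; exact: Rabs_dot_le. Qed.

Lemma vnorm_add k (u v : vec k) : vnorm (fun i => u i + v i) <= vnorm u + vnorm v.
Proof.
apply: vnorm_le; first by have := vnorm_ge0 u; have := vnorm_ge0 v; lra.
have -> : dot (fun i => u i + v i) (fun i => u i + v i) = dot u u + 2 * dot u v + dot v v.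
  by rewrite /dot -vsum_scal -!vsum_add; apply: vsum_ext => i; ring.
have := dot_le u v; rewrite -(vnorm_sqr u) -(vnorm_sqr v); nra.
Qed.

Lemma vnorm_scal k c (u : vec k) : vnorm (fun i => c * u i) = Rabs c * vnorm u.
Proof.
rewrite /vnorm dot_scaler dotC dot_scaler -Rmult_assoc sqrt_mult; [|nra|exact: dot_ge0].
by rewrite -sqrt_Rsqr_abs.
Qed.

Lemma vnorm_lincomb k a b (u v : vec k) :
  vnorm (fun i => a * u i + b * v i) <= Rabs a * vnorm u + Rabs b * vnorm v.
Proof. by rewrite -!vnorm_scal; exact: vnorm_add. Qed.

Lemma vnorm_vsubC k (u v : vec k) : vnorm (vsub u v) = vnorm (vsub v u).
Proof.
rewrite -[RHS]Rmult_1_l -Rabs_R1 -Rabs_Ropp -vnorm_scal.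
by apply: vnorm_ext => i; rewrite /vsub; ring.
Qed.

Lemma vnorm_vsub_triangle k (u v w : vec k) :
  vnorm (vsub u w) <= vnorm (vsub u v) + vnorm (vsub v w).
Proof.
rewrite (vnorm_ext (v := fun i => vsub u v i + vsub v w i)); first exact: vnorm_add.
by move=> i; rewrite /vsub; ring.
Qed.

Lemma vnorm_vsub0 k (u : vec k) : vnorm (vsub u (fun _ => 0)) = vnorm u.
Proof. by apply: vnorm_ext => i; rewrite /vsub; ring. Qed.

Lemma vnorm_vsub_ge k (u v : vec k) : Rabs (vnorm u - vnorm v) <= vnorm (vsub u v).
Proof.
have := vnorm_vsub_triangle u v (fun _ => 0); have := vnorm_vsub_triangle v u (fun _ => 0).
rewrite !vnorm_vsub0 (vnorm_vsubC v u) => h1 h2.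
by apply: Rabs_le; lra.
Qed.

Lemma Rabs_le_vnorm k (u : vec k) i : Rabs (u i) <= vnorm u.
Proof.
rewrite -sqrt_Rsqr_abs /vnorm; apply: sqrt_le_1_alt.
by apply: (@vsum_ge_term _ (fun j => u j * u j) i) => j; nra.
Qed.

Lemma mulmv_lincomb n m (A : mat n m) a b (u v : vec m) i :
  mulmv A (fun j => a * u j + b * v j) i = a * mulmv A u i + b * mulmv A v i.
Proof. by rewrite /mulmv -!vsum_scal -vsum_add; apply: vsum_ext => j; ring. Qed.

Lemma mulmv_vsub n m (A : mat n m) (u v : vec m) :
  mulmv A (vsub u v) = vsub (mulmv A u) (mulmv A v).
Proof.
by apply: functional_extensionality => i; rewrite /vsub /mulmv -vsum_sub; apply: vsum_ext => j; ring.
Qed.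

Lemma mulmv_msub n m (A B : mat n m) w i : mulmv (msub A B) w i = mulmv A w i - mulmv B w i.
Proof. by rewrite /mulmv -vsum_sub; apply: vsum_ext => j; rewrite /msub; ring. Qed.

Lemma mulmv_scal n m (A : mat n m) h w i :
  mulmv (fun i j => h * A i j) w i = h * mulmv A w i.
Proof. by rewrite /mulmv -vsum_scal; apply: vsum_ext => j; ring. Qed.

Lemma mulmv0 n m (A : mat n m) i : mulmv A (fun _ => 0) i = 0.
Proof. by rewrite /mulmv /vsum big1 // => j _; ring. Qed.

Lemma vnorm_mulmv_le_mfrob n m (A : mat n m) (w : vec m) :
  vnorm (mulmv A w) <= mfrob A * vnorm w.
Proof.
apply: vnorm_le; first exact: Rmult_le_pos (sqrt_pos _) (vnorm_ge0 w).
set F := vsum (fun i => vsum (fun j => A i j * A i j)).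
have F0 : 0 <= F by apply: vsum_ge0 => i; apply: vsum_ge0 => j; nra.
have -> : mfrob A * vnorm w * (mfrob A * vnorm w) = vsum (fun i => vsum (fun j => A i j * A i j) * dot w w).
  rewrite (vsum_ext (g := fun i => dot w w * vsum (fun j => A i j * A i j))) => [|i]; last ring.
  rewrite vsum_scal -/F -(vnorm_sqr w) /mfrob -/F.
  have := sqrt_sqrt F F0; nra.
by apply: vsum_le => i; exact: (dot_sqr_le (fun j => A i j) w).
Qed.

Lemma sqrt_add_le a b : 0 <= a -> 0 <= b -> sqrt (a + b) <= sqrt a + sqrt b.
Proof.
move=> a0 b0; have := sqrt_pos a; have := sqrt_pos b => sa sb.
rewrite -(sqrt_Rsqr (sqrt a + sqrt b)); last lra.
apply: sqrt_le_1_alt; rewrite /Rsqr.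
by have := sqrt_sqrt a a0; have := sqrt_sqrt b b0; nra.
Qed.

Lemma sqrt_sqr_add_le a b : 0 <= b -> sqrt (a * a + b) <= Rabs a + sqrt b.
Proof.
by move=> b0; rewrite -sqrt_Rsqr_abs; apply: sqrt_add_le => //; exact: Rle_0_sqr.
Qed.

Lemma Rabs_le_sqrt_sqr_add a b : 0 <= b -> Rabs a <= sqrt (a * a + b).
Proof. by move=> b0; rewrite -sqrt_Rsqr_abs; apply: sqrt_le_1_alt; rewrite /Rsqr; lra. Qed.

Lemma Rdiv_le_0_compat a b : 0 <= a -> 0 < b -> 0 <= a / b.
Proof. by move=> a0 b0; apply: Rmult_le_pos a0 (Rlt_le _ _ (Rinv_0_lt_compat _ b0)). Qed.

(** * Compactness for distance-like functions *)

(* [compact_set] of the statement is [compact_wrt pdist]. *)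
Definition open_wrt (X : Type) (d : X -> X -> R) (U : X -> Prop) : Prop :=
  forall p, U p -> exists e, 0 < e /\ forall q, d p q < e -> U q.

Definition compact_wrt (X : Type) (d : X -> X -> R) (K : X -> Prop) : Prop :=
  forall (I : Type) (U : I -> X -> Prop),
    (forall i, open_wrt d (U i)) ->
    (forall p, K p -> exists i, U i p) ->
    exists l : list I, forall p, K p -> exists i, List.In i l /\ U i p.

Definition zero_on_diag (X : Type) (d : X -> X -> R) := forall x, d x x = 0.
Definition dist_triangle (X : Type) (d : X -> X -> R) := forall x y z, d x z <= d x y + d y z.

Definition vdist k (u v : vec k) := vnorm (vsub v u).
Definition sum_dist (X Y : Type) (dX : X -> X -> R) (dY : Y -> Y -> R) (p q : X * Y) :=
  dX p.1 q.1 + dY p.2 q.2.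
Definition Rvdist k := sum_dist Rdist (@vdist k).

Lemma zero_on_diag_Rdist : zero_on_diag Rdist.
Proof. exact: Rdist_eq. Qed.

Lemma dist_triangle_Rdist : dist_triangle Rdist.
Proof. by move=> x y z; exact: Rdist_tri. Qed.

Lemma zero_on_diag_vdist k : zero_on_diag (@vdist k).
Proof. by move=> x; rewrite /vdist -(vnorm0 k); apply: vnorm_ext => i; rewrite /vsub; ring. Qed.

Lemma dist_triangle_vdist k : dist_triangle (@vdist k).
Proof. by move=> x y z; rewrite /vdist Rplus_comm; exact: vnorm_vsub_triangle. Qed.

Lemma zero_on_diag_sum X Y (dX : X -> X -> R) (dY : Y -> Y -> R) :
  zero_on_diag dX -> zero_on_diag dY -> zero_on_diag (sum_dist dX dY).
Proof. by move=> hX hY x; rewrite /sum_dist hX hY; ring. Qed.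

Lemma dist_triangle_sum X Y (dX : X -> X -> R) (dY : Y -> Y -> R) :
  dist_triangle dX -> dist_triangle dY -> dist_triangle (sum_dist dX dY).
Proof. by move=> hX hY x y z; rewrite /sum_dist; have := hX x.1 y.1 z.1; have := hY x.2 y.2 z.2; lra. Qed.

Lemma zero_on_diag_Rvdist k : zero_on_diag (@Rvdist k).
Proof. exact: (zero_on_diag_sum zero_on_diag_Rdist (@zero_on_diag_vdist k)). Qed.

Lemma dist_triangle_Rvdist k : dist_triangle (@Rvdist k).
Proof. exact: (dist_triangle_sum dist_triangle_Rdist (@dist_triangle_vdist k)). Qed.

Lemma compact_interval a b : compact_wrt Rdist (fun x => a <= x <= b).
Proof.
move=> I U U_open cover.
case: (Rle_or_lt a b) => [ab|ba]; last by exists nil => p hp; lra.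
(* the supremum of the points up to which [a, x] is finitely covered is [b] *)
pose P x := exists l : list I, forall p, a <= p <= x -> exists i, List.In i l /\ U i p.
pose E x := a <= x <= b /\ P x.
have Ea : E a.
  split; first lra; have [i ai] := cover a ltac:(lra).
  by exists [:: i] => p ap; exists i; split; [left|have -> : p = a by lra].
have [c [c_ub c_lub]] := completeness E (ex_intro _ b (fun x Ex => proj2 (proj1 Ex)))
  (ex_intro _ a Ea).
have ac : a <= c by exact: c_ub.
have cb : c <= b by apply: c_lub => x [xab _]; lra.
have [i ci] := cover c ltac:(lra).
have [e [e0 ball_c]] := U_open i c ci.
have [x [[ax Px] xc]] : exists x, E x /\ c - e < x.
  apply: NNPP => nx; have : c <= c - e; last lra.
  by apply: c_lub => y Ey; apply: Rnot_lt_le => yc; apply: nx; exists y.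
set x' := Rmin b (c + e / 2).
have Px' : P x'.
  have [l hl] := Px; exists (i :: l) => p hp.
  case: (Rle_or_lt p x) => px.
  - by have [j [jl Uj]] := hl p ltac:(lra); exists j; split; [right|].
  - exists i; split; first by left.
    apply: ball_c; rewrite /Rdist Rabs_minus_sym; have := c_ub x (conj ax Px); have := Rmin_r b (c + e / 2).
    by move=> *; apply: Rabs_def1; rewrite /x' in hp; lra.
have x'b : x' = b.
  have : E x' by split; [split; [apply: Rmin_glb; lra|apply: Rmin_l]|].
  move/c_ub; rewrite /x' /Rmin; case: Rle_dec; lra.
by rewrite x'b in Px'; case: Px' => l hl; exists l.
Qed.

Lemma fold_Rmin_pos (T : Type) (f : T -> R) (l : list T) :
  (forall x, List.In x l -> 0 < f x) -> 0 < List.fold_right Rmin 1 (List.map f l).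
Proof.
elim: l => [|x l IH] H /=; first lra.
by apply: Rmin_glb_lt; [apply: H; left|apply: IH => y hy; apply: H; right].
Qed.

Lemma fold_Rmin_le (T : Type) (f : T -> R) (l : list T) x :
  List.In x l -> List.fold_right Rmin 1 (List.map f l) <= f x.
Proof.
elim: l => [|y l IH] //= [->|h]; first exact: Rmin_l.
exact: Rle_trans (Rmin_r _ _) (IH h).
Qed.

Lemma fold_Rmax_ge (T : Type) (f : T -> R) (l : list T) x :
  List.In x l -> f x <= List.fold_right Rmax 0 (List.map f l).
Proof.
elim: l => [|y l IH] //= [->|h]; first exact: Rmax_l.
exact: Rle_trans (IH h) (Rmax_r _ _).
Qed.

Lemma open_ball X (d : X -> X -> R) x r :
  dist_triangle d -> open_wrt d (fun y => d x y < r).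
Proof.
move=> tri y xy; exists (r - d x y); split; first lra.
by move=> q yq; have := tri x y q; lra.
Qed.

Section CompactProduct.
Variables (X Y : Type) (dX : X -> X -> R) (dY : Y -> Y -> R).
Hypotheses (rX : zero_on_diag dX) (rY : zero_on_diag dY).
Hypotheses (tX : dist_triangle dX) (tY : dist_triangle dY).
Variables (A : X -> Prop) (B : Y -> Prop).
Hypotheses (cA : compact_wrt dX A) (cB : compact_wrt dY B).

Lemma tube_lemma (I : Type) (U : I -> X * Y -> Prop) a :
  (forall i, open_wrt (sum_dist dX dY) (U i)) ->
  (forall y, B y -> exists i, U i (a, y)) ->
  exists r (l : list I), 0 < r /\
    forall x y, dX a x < r -> B y -> exists i, List.In i l /\ U i (x, y).
Proof.
move=> U_open cover.
have balls (y : {y | B y}) : exists ir : I * R,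
    0 < ir.2 /\ forall q, sum_dist dX dY (a, sval y) q < ir.2 -> U ir.1 q.
  case: y => y By; have [i Ui] := cover y By.
  by have [r [r0 hr]] := U_open i _ Ui; exists (i, r).
have [ch chP] := choice _ balls.
pose V y := fun y' => dY (sval y) y' < (ch y).2 / 2.
have V_cover y : B y -> exists y0, V y0 y.
  move=> By; pose y0 : {y | B y} := exist _ y By.
  by exists y0; rewrite /V rY; have := (chP y0).1; lra.
have [l hl] := @cB _ V (fun y => open_ball tY) V_cover.
exists (List.fold_right Rmin 1 (List.map (fun y => (ch y).2 / 2) l)), (List.map (fun y => (ch y).1) l).
split; first by apply: fold_Rmin_pos => y _; have := (chP y).1; lra.
move=> x y ax By; have [y0 [y0l Vy]] := hl y By.
exists (ch y0).1; split; first exact: List.in_map.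
apply: (chP y0).2; rewrite /sum_dist /=.
by have := @fold_Rmin_le _ (fun y => (ch y).2 / 2) l y0 y0l; rewrite /V in Vy; lra.
Qed.

Lemma compact_prod : compact_wrt (sum_dist dX dY) (fun p => A p.1 /\ B p.2).
Proof.
move=> I U U_open cover.
have tubes (x : {x | A x}) : exists rl : R * list I,
    0 < rl.1 /\ forall x' y, dX (sval x) x' < rl.1 -> B y ->
      exists i, List.In i rl.2 /\ U i (x', y).
  case: x => x Ax.
  have [r [l [r0 hr]]] := tube_lemma U_open (fun y By => cover (x, y) (conj Ax By)).
  by exists (r, l).
have [ct ctP] := choice _ tubes.
pose T x := fun x' => dX (sval x) x' < (ct x).1.
have T_cover x : A x -> exists x0, T x0 x.
  move=> Ax; pose x0 : {x | A x} := exist _ x Ax.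
  by exists x0; rewrite /T rX; exact: (ctP x0).1.
have [la hla] := @cA _ T (fun x => open_ball tX) T_cover.
exists (List.flat_map (fun x => (ct x).2) la) => -[x y] [/= Ax By].
have [x0 [x0l Tx]] := hla x Ax; have [i [il Ui]] := (ctP x0).2 _ _ Tx By.
by exists i; split => //; apply/List.in_flat_map; exists x0.
Qed.

End CompactProduct.

Lemma compact_image (X Y : Type) (dX : X -> X -> R) (dY : Y -> Y -> R)
    (K : X -> Prop) (f : X -> Y) :
  zero_on_diag dX -> dist_triangle dX -> compact_wrt dX K ->
  (forall x, K x -> forall e, 0 < e -> exists r, 0 < r /\
     forall x', dX x x' < r -> dY (f x) (f x') < e) ->
  compact_wrt dY (fun y => exists x, K x /\ f x = y).
Proof.
move=> rX tX cK f_cont I U U_open cover.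
pose V i := fun x => exists r, 0 < r /\ forall x', dX x x' < r -> U i (f x').
have V_open i : open_wrt dX (V i).
  move=> x [r [r0 hr]]; exists r; split => // x' xx'.
  exists (r - dX x x'); split; first lra.
  by move=> x'' hx''; apply: hr; have := tX x x' x''; lra.
have V_cover x : K x -> exists i, V i x.
  move=> Kx; have [i Ui] := cover (f x) (ex_intro _ x (conj Kx erefl)).
  have [e [e0 he]] := U_open i _ Ui; have [r [r0 hr]] := f_cont x Kx e e0.
  by exists i, r; split => // x' xx'; apply: he; exact: hr.
have [l hl] := cK I V V_open V_cover.
exists l => _ [x [Kx <-]]; have [i [il [r [r0 hr]]]] := hl x Kx.
by exists i; split => //; apply: hr; rewrite rX.
Qed.

Lemma compact_bounded_above (X : Type) (d : X -> X -> R) (K D : X -> Prop) (F : X -> R) :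
  zero_on_diag d -> dist_triangle d -> compact_wrt d K -> (forall x, K x -> D x) ->
  (forall x, K x -> forall e, 0 < e -> exists r, 0 < r /\
      forall x', D x' -> d x x' < r -> Rabs (F x' - F x) < e) ->
  exists M, forall x, K x -> F x <= M.
Proof.
move=> rX tX cK KD F_cont.
pose U x := fun p => exists e, 0 < e /\ forall q, D q -> d p q < e -> Rabs (F q - F x) < 1.
have U_open x : open_wrt d (U x).
  move=> p [e [e0 he]]; exists e; split => // q pq.
  exists (e - d p q); split; first lra.
  by move=> q' Dq' qq'; apply: he => //; have := tX p q q'; lra.
have U_cover p : K p -> exists x, U x p.
  by move=> Kp; have [r [r0 hr]] := F_cont p Kp 1 Rlt_0_1; exists p, r.
have [l hl] := cK _ U U_open U_cover.
exists (List.fold_right Rmax 0 (List.map (fun x => F x + 1) l)) => p Kp.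
have [x [xl [e [e0 he]]]] := hl p Kp.
have := he p (KD p Kp) ltac:(rewrite rX; lra).
have := @fold_Rmax_ge _ (fun x => F x + 1) l x xl; have := Rle_abs (F p - F x); simpl; lra.
Qed.

Lemma compact_wrt_ext (X : Type) (d : X -> X -> R) (K K' : X -> Prop) :
  (forall p, K p <-> K' p) -> compact_wrt d K -> compact_wrt d K'.
Proof.
move=> KK' cK I U U_open cover.
have [l hl] := cK I U U_open (fun p Kp => cover p ((KK' p).1 Kp)).
by exists l => p K'p; apply: hl; apply/KK'.
Qed.

Definition cube k B (u : vec k) := forall i, Rabs (u i) <= B.

Lemma compact_cube k B : compact_wrt (@vdist k) (cube B).
Proof.
elim: k => [|k IH].
  move=> I U _ cover; have [i Ui] : exists i, U i (fun _ => 0) by apply: cover => -[].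
  exists [:: i] => p _; exists i; split; first by left.
  by have -> : p = (fun _ => 0) by apply: functional_extensionality => -[].
have vcons_cont (p : R * vec k) e : 0 < e -> exists r, 0 < r /\
    forall p', Rvdist p p' < r -> vdist (vcons p.1 p.2) (vcons p'.1 p'.2) < e.
  move=> e0; exists e; split => // p' h.
  rewrite /vdist vsub_vcons /vnorm dot_vcons.
  apply: Rle_lt_trans (sqrt_sqr_add_le _ (dot_ge0 _)) _.
  by rewrite /Rvdist /sum_dist /Rdist /vdist /vnorm Rabs_minus_sym in h; lra.
have := compact_image (@zero_on_diag_Rvdist k) (@dist_triangle_Rvdist k)
  (compact_prod zero_on_diag_Rdist (@zero_on_diag_vdist k) dist_triangle_Rdist (@dist_triangle_vdist k)
     (@compact_interval (-B) B) IH) (fun p _ => vcons_cont p).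
apply: compact_wrt_ext => v; split => [[[r u] [[/= rB uB] <-]] i|cube_v].
- by rewrite /vcons; case: unlift => [j|]; [exact: uB|apply: Rabs_le].
- exists (v ord0, fun j => v (lift ord0 j)); split; last exact: vcons_eta.
  split => [|j] /=; last exact: cube_v.
  by have := cube_v ord0; have := Rle_abs (v ord0); have := Rle_abs (- v ord0); rewrite Rabs_Ropp; lra.
Qed.

Lemma compact_interval_cube a b k B :
  compact_wrt (@Rvdist k) (fun p => a <= p.1 <= b /\ cube B p.2).
Proof.
exact: (compact_prod zero_on_diag_Rdist (@zero_on_diag_vdist k) dist_triangle_Rdist
  (@dist_triangle_vdist k) (@compact_interval a b) (@compact_cube k B)).
Qed.

(** * Distances and calculus along segments *)

Lemma dist3_t n m t (x : vec n) (u : vec m) s y v : Rabs (s - t) <= dist3 t x u s y v.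
Proof.
rewrite /dist3 Rplus_assoc; apply: Rabs_le_sqrt_sqr_add.
have := dot_ge0 (vsub y x); have := dot_ge0 (vsub v u); lra.
Qed.

Lemma dist3_x n m t (x : vec n) (u : vec m) s y v : vnorm (vsub y x) <= dist3 t x u s y v.
Proof.
apply: sqrt_le_1_alt; have := dot_ge0 (vsub v u); have := Rle_0_sqr (s - t); rewrite /Rsqr; lra.
Qed.

Lemma dist3_u n m t (x : vec n) (u : vec m) s y v : vnorm (vsub v u) <= dist3 t x u s y v.
Proof.
apply: sqrt_le_1_alt; have := dot_ge0 (vsub y x); have := Rle_0_sqr (s - t); rewrite /Rsqr; lra.
Qed.

Lemma dist3_le n m t (x : vec n) (u : vec m) s y v :
  dist3 t x u s y v <= Rabs (s - t) + vnorm (vsub y x) + vnorm (vsub v u).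
Proof.
rewrite /dist3 Rplus_assoc; apply: Rle_trans (sqrt_sqr_add_le _ _) _.
  by have := dot_ge0 (vsub y x); have := dot_ge0 (vsub v u); lra.
by have := sqrt_add_le (dot_ge0 (vsub y x)) (dot_ge0 (vsub v u)); rewrite /vnorm; lra.
Qed.

Lemma dist3_same_tx n m t (y : vec n) (u v : vec m) : dist3 t y u t y v = vnorm (vsub v u).
Proof.
rewrite /dist3 /vnorm; congr sqrt.
by rewrite dot_vsubxx; ring.
Qed.

Lemma dist3_same_u n m t (x : vec n) (w : vec m) s y : dist3 t x w s y w = dist2 t x s y.
Proof.
rewrite /dist3 /dist2; congr sqrt.
by rewrite dot_vsubxx; ring.
Qed.

Lemma dist2_le_dist3 n m t (x : vec n) (u : vec m) s y v : dist2 t x s y <= dist3 t x u s y v.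
Proof. by apply: sqrt_le_1_alt; have := dot_ge0 (vsub v u); lra. Qed.

Lemma dist2_ge0 n t (x : vec n) s y : 0 <= dist2 t x s y.
Proof. exact: sqrt_pos. Qed.

Lemma dist2_le n t (x : vec n) s y : dist2 t x s y <= Rabs (s - t) + vnorm (vsub y x).
Proof. exact/sqrt_sqr_add_le/dot_ge0. Qed.

Lemma dist2C n t (x : vec n) s y : dist2 t x s y = dist2 s y t x.
Proof.
rewrite /dist2; congr (sqrt (_ + _)); first ring.
by apply: vsum_ext => i; rewrite /vsub; ring.
Qed.

Lemma pdist_le n (a b : pt n) : pdist a b <= Rabs (b.1 - a.1) + vnorm (vsub b.2 a.2).
Proof. exact: dist2_le. Qed.

Lemma L_frechet_continuous n m (L : R -> vec n -> vec m -> R) Lt Lx Lu t x u :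
  L_frechet L Lt Lx Lu t x u ->
  forall e, 0 < e -> exists r, 0 < r /\
    forall s y v, dist3 t x u s y v < r -> Rabs (L s y v - L t x u) < e.
Proof.
move=> Lfr e e0; have [d [d0 hd]] := Lfr 1 Rlt_0_1.
have := Rabs_pos (Lt t x u); have := vnorm_ge0 (Lx t x u); have := vnorm_ge0 (Lu t x u).
set a := Rabs (Lt t x u); set b := vnorm (Lx t x u); set c := vnorm (Lu t x u) => c0 b0 a0.
have C0 : 0 < a + b + c + 1 by lra.
exists (Rmin d (e / (a + b + c + 1))); split; first by apply: Rmin_pos => //; apply: Rdiv_lt_0_compat.
move=> s y v near; set D := dist3 t x u s y v in near *.
have D0 : 0 <= D by exact: sqrt_pos.
have lin : Rabs (Lt t x u * (s - t) + dot (Lx t x u) (vsub y x) + dot (Lu t x u) (vsub v u))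
    <= (a + b + c) * D.
  have := Rabs_dot_le (Lx t x u) (vsub y x); have := Rabs_dot_le (Lu t x u) (vsub v u).
  have := dist3_t t x u s y v; have := dist3_x t x u s y v; have := dist3_u t x u s y v.
  have := Rabs_triang (Lt t x u * (s - t) + dot (Lx t x u) (vsub y x)) (dot (Lu t x u) (vsub v u)).
  have := Rabs_triang (Lt t x u * (s - t)) (dot (Lx t x u) (vsub y x)).
  rewrite Rabs_mult -/a -/b -/c -/D; nra.
have rem := hd s y v (Rlt_le_trans _ _ _ near (Rmin_l _ _)).
have small : (a + b + c + 1) * D < e.
  have := Rmult_lt_compat_l _ _ _ C0 (Rlt_le_trans _ _ _ near (Rmin_r _ _)).
  by have -> : (a + b + c + 1) * (e / (a + b + c + 1)) = e by field; lra.
have := Rabs_triang (L s y v - L t x u - (Lt t x u * (s - t) + dot (Lx t x u) (vsub y x)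
  + dot (Lu t x u) (vsub v u))) (Lt t x u * (s - t) + dot (Lx t x u) (vsub y x)
  + dot (Lu t x u) (vsub v u)).
rewrite -/D in rem; have -> : forall p q : R, p - q + q = p by move=> *; ring.
lra.
Qed.

Lemma small_step d D : 0 < d -> 0 <= D ->
  exists r, 0 < r /\ forall h, Rabs h < r -> Rabs h * D < d.
Proof.
move=> d0 D0; exists (d / (D + 1)); split; first by apply: Rdiv_lt_0_compat; lra.
move=> h hr; have := Rmult_lt_compat_r (D + 1) _ _ ltac:(lra) hr.
rewrite /Rdiv Rmult_assoc Rinv_l; last lra.
have := Rabs_pos h; nra.
Qed.

Lemma derivable_pt_lim_of_remainder (f : R -> R) x l C : 0 <= C ->
  (forall eps, 0 < eps -> exists d, 0 < d /\ forall h, Rabs h < d ->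
     Rabs (f (x + h) - f x - h * l) <= eps * (Rabs h * C)) ->
  derivable_pt_lim f x l.
Proof.
move=> C0 rem eps eps0.
have epsC : 0 < eps / (C + 1) by apply: Rdiv_lt_0_compat; lra.
have [d [d0 hd]] := rem _ epsC.
exists (mkposreal _ d0) => h h0 /= hd'.
have habs : 0 < Rabs h by exact: Rabs_pos_lt.
have -> : (f (x + h) - f x) / h - l = (f (x + h) - f x - h * l) / h by field.
rewrite /Rdiv Rabs_mult Rabs_inv.
apply: (Rle_lt_trans _ (eps / (C + 1) * C)).
  apply: (Rmult_le_reg_r (Rabs h)) => //.
  rewrite Rmult_assoc Rinv_l; last lra.
  have := hd h hd'; lra.
have -> : eps / (C + 1) * C = eps - eps / (C + 1) by field; lra.
lra.
Qed.

Lemma MVT_Rabs_le (f f' M : R -> R) a b :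
  0 <= a <= 1 -> 0 <= b <= 1 ->
  (forall c, 0 <= c <= 1 -> derivable_pt_lim f c (f' c)) ->
  (forall c, 0 <= c <= 1 -> Rabs (f' c) <= M c) ->
  exists c, 0 <= c <= 1 /\ Rabs (f b - f a) <= M c * Rabs (b - a).
Proof.
move=> a01 b01 df f'M.
wlog ab : a b a01 b01 / a <= b.
  move=> H; case: (Rle_or_lt a b) => [|ba]; first exact: H.
  have [c [c01 hc]] := H b a b01 a01 (Rlt_le _ _ ba).
  by exists c; rewrite Rabs_minus_sym (Rabs_minus_sym b).
case: (Rle_lt_or_eq_dec a b ab) => [{}ab|<-].
- have [c [-> hc]] := MVT_cor2 f f' a b ab (fun c hc => df c ltac:(lra)).
  exists c; split; first lra.
  by rewrite Rabs_mult; apply: Rmult_le_compat_r; [exact: Rabs_pos|apply: f'M; lra].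
- exists a; split => //; rewrite !Rminus_diag Rabs_R0 Rmult_0_r; lra.
Qed.

Definition lerp (t s l : R) := t + l * (s - t).
Definition vlerp n (y z : vec n) l : vec n := fun i => lerp (y i) (z i) l.

Lemma lerp0 t s : lerp t s 0 = t. Proof. rewrite /lerp; ring. Qed.
Lemma lerp1 t s : lerp t s 1 = s. Proof. rewrite /lerp; ring. Qed.

Lemma vlerp0 n (y z : vec n) : vlerp y z 0 = y.
Proof. by apply: functional_extensionality => i; rewrite /vlerp lerp0. Qed.

Lemma vlerp1 n (y z : vec n) : vlerp y z 1 = z.
Proof. by apply: functional_extensionality => i; rewrite /vlerp lerp1. Qed.

Lemma lerpD t s l h : lerp t s (l + h) - lerp t s l = h * (s - t).
Proof. rewrite /lerp; ring. Qed.

Lemma vsub_vlerpD n (y z : vec n) l h :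
  vsub (vlerp y z (l + h)) (vlerp y z l) = (fun i => h * vsub z y i).
Proof. by apply: functional_extensionality => i; rewrite /vsub /vlerp lerpD. Qed.

Lemma in01_lerp t s l : in01 t -> in01 s -> 0 <= l <= 1 -> in01 (lerp t s l).
Proof. by rewrite /in01 /lerp => *; split; nra. Qed.

Lemma dist2_vlerp n t s (y z : vec n) l h :
  dist2 (lerp t s l) (vlerp y z l) (lerp t s (l + h)) (vlerp y z (l + h)) = Rabs h * dist2 t y s z.
Proof.
rewrite /dist2 lerpD vsub_vlerpD dot_scaler dotC dot_scaler -sqrt_Rsqr_abs -sqrt_mult.
- by congr sqrt; rewrite /Rsqr; ring.
- exact: Rle_0_sqr.
- by have := dot_ge0 (vsub z y); have := Rle_0_sqr (s - t); rewrite /Rsqr; lra.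
Qed.

Lemma dist3_vlerp n m t s (y z : vec n) (w : vec m) l h :
  dist3 (lerp t s l) (vlerp y z l) w (lerp t s (l + h)) (vlerp y z (l + h)) w
  = Rabs h * dist2 t y s z.
Proof. by rewrite dist3_same_u dist2_vlerp. Qed.

Lemma dist2_lerp0 n t s (y z : vec n) l : 0 <= l <= 1 ->
  dist2 t y (lerp t s l) (vlerp y z l) = l * dist2 t y s z.
Proof.
by move=> l01; have := dist2_vlerp t s y z 0 l; rewrite lerp0 vlerp0 Rplus_0_l Rabs_pos_eq //; lra.
Qed.

Definition gradtx_norm n m (Lt : R -> vec n -> vec m -> R) (Lx : R -> vec n -> vec m -> vec n) t x u :=
  sqrt (Lt t x u * Lt t x u + dot (Lx t x u) (Lx t x u)).

Lemma gradtx_norm_ge0 n m (Lt : R -> vec n -> vec m -> R) Lx t x u : 0 <= gradtx_norm Lt Lx t x u.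
Proof. exact: sqrt_pos. Qed.

Section LAlongSegments.
Variables (n m : nat) (L Lt : R -> vec n -> vec m -> R) (Lx : R -> vec n -> vec m -> vec n).
Variable (Lu : R -> vec n -> vec m -> vec m).
Hypothesis L_fr : forall t x u, in01 t -> L_frechet L Lt Lx Lu t x u.
Variables (t s : R) (y z : vec n) (w : vec m).
Hypotheses (t01 : in01 t) (s01 : in01 s).

Lemma L_lerp_derivable l : 0 <= l <= 1 ->
  derivable_pt_lim (fun l => L (lerp t s l) (vlerp y z l) w) l
    (Lt (lerp t s l) (vlerp y z l) w * (s - t) + dot (Lx (lerp t s l) (vlerp y z l) w) (vsub z y)).
Proof.
move=> l01; apply: (derivable_pt_lim_of_remainder (dist2_ge0 t y s z)) => eps eps0.
have [d [d0 hd]] := L_fr (vlerp y z l) w (in01_lerp t01 s01 l01) eps0.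
have [r [r0 hr]] := small_step d0 (dist2_ge0 t y s z).
exists r; split => // h hh; have := hd (lerp t s (l + h)) (vlerp y z (l + h)) w.
rewrite dist3_vlerp lerpD vsub_vlerpD dot_scaler dot_vsubxx.
by move=> /(_ (hr h hh)); congr (Rabs _ <= _); ring.
Qed.

Lemma L_lerp_MVT a b : 0 <= a <= 1 -> 0 <= b <= 1 ->
  exists c, 0 <= c <= 1 /\
   Rabs (L (lerp t s b) (vlerp y z b) w - L (lerp t s a) (vlerp y z a) w)
    <= gradtx_norm Lt Lx (lerp t s c) (vlerp y z c) w * dist2 t y s z * Rabs (b - a).
Proof.
move=> a01 b01.
apply: (MVT_Rabs_le (f := fun l => L (lerp t s l) (vlerp y z l) w)) => // [c|c _].
- exact: L_lerp_derivable.
- exact: Rabs_dot_vcons_le.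
Qed.

Lemma L_lipschitz_tx M :
  (forall c, 0 <= c <= 1 -> gradtx_norm Lt Lx (lerp t s c) (vlerp y z c) w <= M) ->
  Rabs (L s z w - L t y w) <= M * dist2 t y s z.
Proof.
move=> gradM; have [c [c01 hc]] := L_lerp_MVT (a := 0) (b := 1) ltac:(lra) ltac:(lra).
rewrite lerp0 lerp1 vlerp0 vlerp1 Rminus_0_r Rabs_R1 Rmult_1_r in hc.
by apply: (Rle_trans _ _ _ hc); apply: Rmult_le_compat_r; [exact: dist2_ge0|exact: gradM].
Qed.

End LAlongSegments.

Lemma Dg_scal n m (gt : R -> vec n -> mat n m) gx t x h a (v : vec n) i j :
  Dg gt gx t x (h * a) (fun k => h * v k) i j = h * Dg gt gx t x a v i j.
Proof.
rewrite /Dg (vsum_ext (g := fun k => h * (v k * gx t x k i j))) ?vsum_scal => [|k]; ring.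
Qed.

Section GAlongSegments.
Variables (n m : nat) (g gt : R -> vec n -> mat n m) (gx : R -> vec n -> 'I_n -> mat n m).
Hypothesis g_C1gt : g_C1 g gt gx.
Variable cdg : R.
Hypothesis Dg_bound : forall t x ht hx, in01 t ->
  opnorm_le (Dg gt gx t x ht hx) (cdg * sqrt (ht * ht + dot hx hx)).
Variables (t s : R) (y z : vec n) (w : vec m).
Hypotheses (t01 : in01 t) (s01 : in01 s).

Lemma g_lerp_derivable (e : vec n) l : 0 <= l <= 1 ->
  derivable_pt_lim (fun l => dot e (mulmv (g (lerp t s l) (vlerp y z l)) w)) l
    (dot e (mulmv (Dg gt gx (lerp t s l) (vlerp y z l) (s - t) (vsub z y)) w)).
Proof.
move=> l01.
have C0 : 0 <= vnorm e * (dist2 t y s z * vnorm w).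
  by apply: Rmult_le_pos; [|apply: Rmult_le_pos]; [exact: vnorm_ge0|exact: dist2_ge0|exact: vnorm_ge0].
apply: (derivable_pt_lim_of_remainder C0) => eps eps0.
set p := lerp t s l; set px := vlerp y z l.
have [d [d0 hd]] := g_C1gt.1 p px (in01_lerp t01 s01 l01) eps eps0.
have [r [r0 hr]] := small_step d0 (dist2_ge0 t y s z).
exists r; split => // h hh.
have := hd (lerp t s (l + h)) (vlerp y z (l + h)); rewrite dist2_vlerp => /(_ (hr h hh)).
rewrite lerpD vsub_vlerpD.
set E := msub _ _ => hE.
have -> : dot e (mulmv (g (lerp t s (l + h)) (vlerp y z (l + h))) w) - dot e (mulmv (g p px) w)
    - h * dot e (mulmv (Dg gt gx p px (s - t) (vsub z y)) w) = dot e (mulmv E w).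
  rewrite -dot_scaler /dot -!vsum_sub; apply: vsum_ext => i.
  rewrite /E !mulmv_msub.
  have -> : mulmv (Dg gt gx p px (h * (s - t)) (fun k => h * vsub z y k)) w i
      = mulmv (fun i j => h * Dg gt gx p px (s - t) (vsub z y) i j) w i.
    by apply: vsum_ext => j; rewrite Dg_scal.
  rewrite mulmv_scal; ring.
apply: Rle_trans (Rabs_dot_le _ _) _.
have EwD : vnorm (mulmv E w) <= eps * (Rabs h * dist2 t y s z) * vnorm w.
  exact: Rle_trans (vnorm_mulmv_le_mfrob E w) (Rmult_le_compat_r _ _ _ (vnorm_ge0 w) hE).
apply: Rle_trans (Rmult_le_compat_l _ _ _ (vnorm_ge0 e) EwD) _.
right; ring.
Qed.

Lemma g_lipschitz : 0 <= cdg ->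
  vnorm (vsub (mulmv (g s z) w) (mulmv (g t y) w)) <= cdg * dist2 t y s z * vnorm w.
Proof.
move=> cdg0; set e := vsub (mulmv (g s z) w) (mulmv (g t y) w).
have B0 : 0 <= cdg * dist2 t y s z * vnorm w.
  by apply: Rmult_le_pos; [apply: Rmult_le_pos|]; [|exact: dist2_ge0|exact: vnorm_ge0].
(* test the increment of [g w] against its own direction [e] *)
have [c [c01 hc]] := MVT_Rabs_le (M := fun _ => vnorm e * (cdg * dist2 t y s z * vnorm w))
  (a := 0) (b := 1) ltac:(lra) ltac:(lra) (g_lerp_derivable e) (fun c c01 =>
    Rle_trans _ _ _ (Rabs_dot_le _ _) (Rmult_le_compat_l _ _ _ (vnorm_ge0 e)
      (@Dg_bound _ _ (s - t) (vsub z y) (in01_lerp t01 s01 c01) w))).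
rewrite lerp0 lerp1 vlerp0 vlerp1 Rminus_0_r Rabs_R1 Rmult_1_r in hc.
have ee : vnorm e * vnorm e <= vnorm e * (cdg * dist2 t y s z * vnorm w).
  rewrite vnorm_sqr; apply: Rle_trans (Rle_abs _) _; rewrite /dot -vsum_sub in hc.
  by apply: Rle_trans _ hc; right; congr Rabs; apply: vsum_ext => i; rewrite /e /vsub; ring.
case: (Rle_lt_or_eq_dec 0 (vnorm e) (vnorm_ge0 e)) => [e0|<-] //.
exact: Rmult_le_reg_l e0 ee.
Qed.

End GAlongSegments.

(** * The sets G(t, y) *)

Lemma L_convex n m (L : R -> vec n -> vec m -> R) Lu mu t x (w1 w2 : vec m) a b :
  0 <= mu ->
  (forall u v, L t x u + dot (Lu t x u) (vsub v u) + mu / 2 * (vnorm (vsub v u) * vnorm (vsub v u))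
     <= L t x v) ->
  0 <= a -> 0 <= b -> a + b = 1 ->
  L t x (fun i => a * w1 i + b * w2 i) <= a * L t x w1 + b * L t x w2.
Proof.
move=> mu0 C2 a0 b0 ab; set wc := fun i => a * w1 i + b * w2 i.
have sq0 (v : vec m) : 0 <= mu / 2 * (vnorm v * vnorm v) by rewrite vnorm_sqr; have := dot_ge0 v; nra.
have tangent0 : a * dot (Lu t x wc) (vsub w1 wc) + b * dot (Lu t x wc) (vsub w2 wc) = 0.
  rewrite -!dot_scaler /dot -vsum_add /vsum big1 // => i _.
  rewrite /vsub /wc; have -> : b = 1 - a by lra.
  ring.
have := Rmult_le_compat_l a _ _ a0 (C2 wc w1); have := Rmult_le_compat_l b _ _ b0 (C2 wc w2).
have := Rmult_le_pos _ _ a0 (sq0 (vsub w1 wc)); have := Rmult_le_pos _ _ b0 (sq0 (vsub w2 wc)).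
have : L t x wc = (a + b) * L t x wc by rewrite ab; ring.
lra.
Qed.

Lemma Rdiv_diff_le be l l' r r' : 0 < be -> be <= l -> be <= l' -> 0 <= r <= 1 ->
  Rabs (r' / l' - r / l) <= Rabs (r' - r) / be + Rabs (l' - l) / (be * be).
Proof.
move=> be0 bel bel' r01.
have -> : r' / l' - r / l = (r' - r) / l' + r * ((l - l') / (l * l')) by field; lra.
apply: Rle_trans (Rabs_triang _ _) _; rewrite /Rdiv !Rabs_mult !Rabs_inv.
rewrite (Rabs_pos_eq l'); last lra.
rewrite (Rabs_pos_eq r); last lra.
rewrite (Rabs_pos_eq (l * l')); last nra.
rewrite (Rabs_minus_sym l l') !Rinv_mult.
have i1 : / l' <= / be by apply: Rinv_le_contravar.
have i2 : / l <= / be by apply: Rinv_le_contravar.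
have il' := Rinv_0_lt_compat l' ltac:(lra); have il := Rinv_0_lt_compat l ltac:(lra).
have ii : / l * / l' <= / be * / be by apply: Rmult_le_compat; lra.
have t1 : Rabs (r' - r) * / l' <= Rabs (r' - r) * / be.
  by apply: Rmult_le_compat_l => //; exact: Rabs_pos.
have t2 : Rabs (l' - l) * (/ l * / l') <= Rabs (l' - l) * (/ be * / be).
  by apply: Rmult_le_compat_l => //; exact: Rabs_pos.
have : 0 <= Rabs (l' - l) * (/ l * / l') by apply: Rmult_le_pos; [exact: Rabs_pos|nra].
nra.
Qed.

Lemma pdist_scaled_le n k k' (G G' : vec n) :
  pdist (k, fun i => k * G i) (k', fun i => k' * G' i)
  <= Rabs (k' - k) * (1 + vnorm G') + Rabs k * vnorm (vsub G' G).
Proof.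
apply: Rle_trans (pdist_le _ _) _; rewrite /=.
rewrite (vnorm_ext (v := fun i => (k' - k) * G' i + k * vsub G' G i)) => [|i]; last by rewrite /vsub; ring.
by have := vnorm_lincomb (k' - k) k G' (vsub G' G); lra.
Qed.

Section TheSetG.
Variables (n m : nat) (L : R -> vec n -> vec m -> R) (g : R -> vec n -> mat n m) (beta : R).

Definition Gpoint t y rho (w : vec m) : pt n :=
  (rho / (L t y w + beta), fun i => rho * mulmv (g t y) w i / (L t y w + beta)).

Lemma GpointE t y rho w : Gpoint t y rho w =
  (rho / (L t y w + beta), fun i => rho / (L t y w + beta) * mulmv (g t y) w i).
Proof. by congr pair; apply: functional_extensionality => i; rewrite /Rdiv; ring. Qed.

Lemma Gset_Gpoint t y rho w : 0 <= rho <= 1 -> Gset L g beta t y (Gpoint t y rho w).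
Proof. by move=> rho01; exists w, rho. Qed.

Lemma GsetP t y p : Gset L g beta t y p ->
  exists rho w, 0 <= rho <= 1 /\ p = Gpoint t y rho w.
Proof.
case=> w [rho [rho01 [p1 p2]]]; exists rho, w; split => //.
by rewrite (surjective_pairing p) p1; congr pair; apply: functional_extensionality.
Qed.

Lemma Gset_origin t y : Gset L g beta t y (0, fun _ => 0).
Proof.
suff -> : ((0, fun _ => 0) : pt n) = Gpoint t y 0 (fun _ => 0) by apply: Gset_Gpoint; lra.
by rewrite /Gpoint /Rdiv Rmult_0_l; congr pair; apply: functional_extensionality => i; ring.
Qed.

Lemma Gset_convex t y :
  (forall w, 0 < L t y w + beta) ->
  (forall (w1 w2 : vec m) a b, 0 <= a -> 0 <= b -> a + b = 1 ->
     L t y (fun i => a * w1 i + b * w2 i) <= a * L t y w1 + b * L t y w2) ->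
  convex_set (Gset L g beta t y).
Proof.
move=> pos conv p q lam /GsetP [r1 [w1 [r1_01 ->]]] /GsetP [r2 [w2 [r2_01 ->]]] lam01 /=.
have l1 := pos w1; have l2 := pos w2.
set al := lam * r1 / (L t y w1 + beta); set ga := (1 - lam) * r2 / (L t y w2 + beta).
have al0 : 0 <= al by apply: Rdiv_le_0_compat; nra.
have ga0 : 0 <= ga by apply: Rdiv_le_0_compat; nra.
have -> : lam * (r1 / (L t y w1 + beta)) + (1 - lam) * (r2 / (L t y w2 + beta)) = al + ga.
  by rewrite /al /ga /Rdiv; ring.
have -> : (fun i => lam * (r1 * mulmv (g t y) w1 i / (L t y w1 + beta))
    + (1 - lam) * (r2 * mulmv (g t y) w2 i / (L t y w2 + beta)))
    = (fun i => al * mulmv (g t y) w1 i + ga * mulmv (g t y) w2 i).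
  by apply: functional_extensionality => i; rewrite /al /ga /Rdiv; ring.
case: (Rle_lt_or_eq_dec 0 (al + ga) ltac:(lra)) => [s0|s0]; last first.
  have -> : al = 0 by lra. have -> : ga = 0 by lra.
  rewrite Rplus_0_r (_ : (fun i => _) = fun _ => 0); first exact: Gset_origin.
  by apply: functional_extensionality => i; ring.
(* the convex combination is the point of the barycentric control, with a
   smaller [rho] thanks to the convexity of [L] *)
set a := al / (al + ga); set b := ga / (al + ga).
have a0 : 0 <= a by exact: Rdiv_le_0_compat.
have b0 : 0 <= b by exact: Rdiv_le_0_compat.
have ab : a + b = 1 by rewrite /a /b; field; lra.
set w := fun i => a * w1 i + b * w2 i.
have lw := pos w.
have Lw : L t y w <= a * L t y w1 + b * L t y w2 := conv w1 w2 a b a0 b0 ab.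
have rho1 : (al + ga) * (L t y w + beta) <= 1.
  have e1 : al * (L t y w1 + beta) = lam * r1 by rewrite /al; field; lra.
  have e2 : ga * (L t y w2 + beta) = (1 - lam) * r2 by rewrite /ga; field; lra.
  have : (al + ga) * L t y w <= al * L t y w1 + ga * L t y w2.
    have -> : al * L t y w1 + ga * L t y w2 = (al + ga) * (a * L t y w1 + b * L t y w2).
      by rewrite /a /b; field; lra.
    by apply: Rmult_le_compat_l; lra.
  nra.
suff -> : (al + ga, fun i => al * mulmv (g t y) w1 i + ga * mulmv (g t y) w2 i)
    = Gpoint t y ((al + ga) * (L t y w + beta)) w.
  by apply: Gset_Gpoint; split; [apply: Rmult_le_pos|]; lra.
rewrite /Gpoint; congr pair; first by field; lra.
apply: functional_extensionality => i; move: lw; rewrite /w mulmv_lincomb /a /b => lw.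
by field; lra.
Qed.

Section Compactness.
Variables (t : R) (y : vec n) (cg : R).
Hypotheses (beta0 : 0 < beta) (cg0 : 0 < cg) (L0 : forall w, 0 <= L t y w).
Hypothesis g_bound : opnorm_le (g t y) cg.

Lemma Gpoint_continuous Lt Lx Lu (p : R * vec m) :
  (forall w, L_frechet L Lt Lx Lu t y w) -> 0 <= p.1 <= 1 ->
  forall e, 0 < e -> exists r, 0 < r /\
    forall p', Rvdist p p' < r ->
      pdist (Gpoint t y p.1 p.2) (Gpoint t y p'.1 p'.2) < e.
Proof.
case: p => rho w /= L_fr rho01 e e0.
have Lbeta v : beta <= L t y v + beta by have := L0 v; lra.
have ib : 0 < / beta by apply: Rinv_0_lt_compat.
have ib2 : 0 < / (beta * beta) by apply: Rinv_0_lt_compat; nra.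
set A := (/ beta + / (beta * beta)) * (1 + cg * (vnorm w + 1)) + cg / beta.
have A0 : 0 <= A.
  have w0 := vnorm_ge0 w.
  by rewrite /A /Rdiv; apply: Rplus_le_le_0_compat; apply: Rmult_le_pos; nra.
set eta := e / (A + 1).
have eta0 : 0 < eta by apply: Rdiv_lt_0_compat; lra.
have [dL [dL0 hdL]] := L_frechet_continuous (L_fr w) eta0.
exists (Rmin 1 (Rmin eta dL)); split; first by repeat apply: Rmin_pos; lra.
case=> rho' w'; rewrite /Rvdist /sum_dist /Rdist /vdist /= Rabs_minus_sym => near.
have := Rmin_l 1 (Rmin eta dL); have := Rmin_r 1 (Rmin eta dL).
have := Rmin_l eta dL; have := Rmin_r eta dL.
have := Rabs_pos (rho' - rho); have := vnorm_ge0 (vsub w' w) => dw0 dr0 m1 m2 m3 m4.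
have dLw : Rabs (L t y w' - L t y w) < eta.
  by apply: (hdL t y w'); rewrite dist3_same_tx; lra.
rewrite !GpointE; apply: Rle_lt_trans (pdist_scaled_le _ _ _ _) _.
set k := rho / _; set k' := rho' / _.
have dk : Rabs (k' - k) <= eta * (/ beta + / (beta * beta)).
  apply: Rle_trans (Rdiv_diff_le rho' beta0 (Lbeta w) (Lbeta w') rho01) _.
  have -> : L t y w' + beta - (L t y w + beta) = L t y w' - L t y w by ring.
  by rewrite /Rdiv; nra.
have k_le : Rabs k <= / beta.
  have := Lbeta w => Lw.
  rewrite /k /Rdiv Rabs_mult Rabs_inv !Rabs_pos_eq; try lra.
  have := Rinv_le_contravar beta (L t y w + beta) beta0 Lw.
  have := Rinv_0_lt_compat (L t y w + beta) ltac:(lra); nra.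
have Gw' : vnorm (mulmv (g t y) w') <= cg * (vnorm w + 1).
  apply: Rle_trans (g_bound w') _; apply: Rmult_le_compat_l; first lra.
  by have := vnorm_vsub_triangle w' w (fun _ => 0); rewrite !vnorm_vsub0; lra.
have dG : vnorm (vsub (mulmv (g t y) w') (mulmv (g t y) w)) <= cg * eta.
  rewrite -mulmv_vsub; apply: Rle_trans (g_bound _) _; apply: Rmult_le_compat_l; lra.
have e_A : eta * A < e.
  have -> : eta * A = e - eta by rewrite /eta; field; lra.
  lra.
have := Rmult_le_compat _ _ _ _ (Rabs_pos _) (Rplus_le_le_0_compat _ _ Rle_0_1 (vnorm_ge0 _)) dk
  (Rplus_le_compat_l 1 _ _ Gw').
have := Rmult_le_compat _ _ _ _ (Rabs_pos _) (vnorm_ge0 _) k_le dG.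
have : eta * A = eta * (/ beta + / (beta * beta)) * (1 + cg * (vnorm w + 1)) + / beta * (cg * eta).
  by rewrite /A /Rdiv; ring.
lra.
Qed.

Variables (theta : R -> R) (r0 : R).
Hypotheses (L_theta : forall w, L t y w >= theta (vnorm w)) (theta0 : forall r, 0 <= r -> theta r > 0).
Hypothesis theta_superlinear : forall eps, 0 < eps -> exists R0, forall r, r >= R0 -> Rabs (r / theta r) < eps.
Hypothesis theta_ge : forall r, r >= r0 -> theta r >= r.

Lemma Gpoint_vanishes e : 0 < e -> exists W, 0 <= W /\
  forall rho w, 0 <= rho <= 1 -> W < vnorm w -> pdist (0, fun _ => 0) (Gpoint t y rho w) < e.
Proof.
move=> e0; have [R0 hR0] := @theta_superlinear (e / (2 * cg)) ltac:(apply: Rdiv_lt_0_compat; lra).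
set W := Rmax (Rmax R0 r0) (Rmax 0 (2 / e)).
have WR0 : R0 <= W := Rle_trans _ _ _ (Rmax_l R0 r0) (Rmax_l _ _).
have Wr0 : r0 <= W := Rle_trans _ _ _ (Rmax_r R0 r0) (Rmax_l _ _).
have W0 : 0 <= W := Rle_trans _ _ _ (Rmax_l 0 (2 / e)) (Rmax_r _ _).
have We : 2 / e <= W := Rle_trans _ _ _ (Rmax_r 0 (2 / e)) (Rmax_r _ _).
exists W; split => // rho w rho01 Ww.
set v := vnorm w in Ww *; have v0 : 0 < v by lra.
have th_v : v <= theta v.
  have vr0 : v >= r0 by lra.
  have := @theta_ge v vr0; lra.
have l_th : theta v <= L t y w + beta by have := L_theta w; rewrite -/v; lra.
have k_le : Rabs (rho / (L t y w + beta)) <= / theta v.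
  rewrite /Rdiv Rabs_mult Rabs_inv !Rabs_pos_eq; try lra.
  have := Rinv_le_contravar _ _ (@theta0 v (Rlt_le _ _ v0)) l_th.
  have := Rinv_0_lt_compat (L t y w + beta) ltac:(lra); nra.
have inv_v : / v < e / 2.
  apply: (Rmult_lt_reg_l v) => //; rewrite Rinv_r; last lra.
  have := Rmult_lt_compat_r e _ _ e0 (Rle_lt_trans _ _ _ We Ww).
  have -> : 2 / e * e = 2 by field; lra.
  lra.
have v_th : cg * v * / theta v < e / 2.
  have := hR0 v ltac:(lra); rewrite Rabs_pos_eq; last first.
    by apply: Rdiv_le_0_compat; [lra|apply: theta0; lra].
  move=> /(Rmult_lt_compat_l cg _ _ cg0).
  have -> : cg * (e / (2 * cg)) = e / 2 by field; lra.
  by rewrite /Rdiv Rmult_assoc.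
rewrite GpointE.
rewrite (_ : (fun _ => 0) = fun i => 0 * mulmv (g t y) w i); last first.
  by apply: functional_extensionality => i; ring.
apply: Rle_lt_trans (pdist_scaled_le _ _ _ _) _.
rewrite Rminus_0_r Rabs_R0 Rmult_0_l Rplus_0_r.
have := Rinv_le_contravar _ _ v0 th_v.
have := Rmult_le_compat _ _ _ _ (Rabs_pos _) (Rplus_le_le_0_compat _ _ Rle_0_1 (vnorm_ge0 _)) k_le
  (Rplus_le_compat_l 1 _ _ (g_bound w)).
rewrite -/v; nra.
Qed.

Lemma Gset_compact Lt Lx Lu :
  (forall w, L_frechet L Lt Lx Lu t y w) -> compact_set (Gset L g beta t y).
Proof.
move=> L_fr I U U_open cover.
have [i0 Ui0] := cover _ (Gset_origin t y).
have [e0 [e00 ball0]] := U_open i0 _ Ui0.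
have [W [W0 far]] := Gpoint_vanishes e00.
have cimg := compact_image (f := fun x => Gpoint t y x.1 x.2) (dY := @pdist n)
  (@zero_on_diag_Rvdist m) (@dist_triangle_Rvdist m) (@compact_interval_cube 0 1 m W)
  (fun x Kx => Gpoint_continuous L_fr Kx.1).
have [l hl] : exists l : list I, forall p, (exists x, (0 <= x.1 <= 1 /\ cube W x.2)
    /\ Gpoint t y x.1 x.2 = p) -> exists i, List.In i l /\ U i p.
  apply: cimg => // _ [x [Kx <-]]; exact/cover/Gset_Gpoint/Kx.1.
exists (i0 :: l) => p /GsetP [rho [w [rho01 ->]]].
case: (classic (cube W w)) => [Ww|Ww].
- have [i [il Ui]] := hl _ (ex_intro _ (rho, w) (conj (conj rho01 Ww) erefl)).
  by exists i; split; [right|].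
- exists i0; split; [by left|apply: ball0; apply: far => //].
  have [j /Rnot_le_lt Wj] := not_all_ex_not _ _ Ww.
  exact: Rlt_le_trans Wj (Rabs_le_vnorm w j).
Qed.

End Compactness.

End TheSetG.

(** * Bounds on compact boxes *)

Lemma bounded_on_box n m (F : R -> vec n -> vec m -> R) Bx Bu :
  cont3R F -> exists M, forall t x u, in01 t -> cube Bx x -> cube Bu u -> F t x u <= M.
Proof.
move=> F_cont.
pose d := sum_dist (@Rvdist n) (@vdist m).
have rd : zero_on_diag d := zero_on_diag_sum (@zero_on_diag_Rvdist n) (@zero_on_diag_vdist m).
have td : dist_triangle d := dist_triangle_sum (@dist_triangle_Rvdist n) (@dist_triangle_vdist m).
have cK := compact_prod (@zero_on_diag_Rvdist n) (@zero_on_diag_vdist m) (@dist_triangle_Rvdist n)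
  (@dist_triangle_vdist m) (@compact_interval_cube 0 1 n Bx) (@compact_cube m Bu).
have F_cont' (p : R * vec n * vec m) : (0 <= p.1.1 <= 1 /\ cube Bx p.1.2) /\ cube Bu p.2 ->
    forall e, 0 < e -> exists r, 0 < r /\ forall p', in01 p'.1.1 -> d p p' < r ->
      Rabs (F p'.1.1 p'.1.2 p'.2 - F p.1.1 p.1.2 p.2) < e.
  case: p => [[t x] u] [[/= t01 _] _] e e0; have [r [r0 hr]] := F_cont t x u t01 e e0.
  exists r; split => // -[[s y] v] /= s01 near; apply: hr => //.
  apply: Rle_lt_trans (dist3_le _ _ _ _ _ _) _.
  by rewrite /d /Rvdist /sum_dist /Rdist /vdist /= Rabs_minus_sym in near; lra.
have [M HM] := compact_bounded_above rd td cK (fun p Kp => Kp.1.1) F_cont'.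
by exists M => t x u t01 Bx_x Bu_u; exact: (HM ((t, x), u)).
Qed.

Lemma cube_of_vnorm_le n (x : vec n) B : vnorm x <= B -> cube B x.
Proof. by move=> xB i; exact: Rle_trans (Rabs_le_vnorm x i) xB. Qed.

Lemma L0_bounded n m (L : R -> vec n -> vec m -> R) Lt Lx Lu B :
  (forall t x u, in01 t -> L_frechet L Lt Lx Lu t x u) ->
  exists M0, forall t x, in01 t -> vnorm x <= B -> L t x (fun _ => 0) <= M0.
Proof.
move=> L_fr.
have L0_cont : cont3R (fun t x (_ : vec m) => L t x (fun _ => 0)).
  move=> t x u t01 e e0; have [r [r0 hr]] := L_frechet_continuous (L_fr t x (fun _ => 0) t01) e0.
  exists r; split => // s y v _ near; apply: hr; apply: Rle_lt_trans near.
  by rewrite dist3_same_u; exact: dist2_le_dist3.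
have [M0 HM0] := bounded_on_box B 0 L0_cont.
exists M0 => t x t01 xB; apply: (HM0 t x (fun _ => 0)) => // [|i]; first exact: cube_of_vnorm_le.
by rewrite Rabs_R0; apply: Rle_refl.
Qed.

Lemma gradtx_norm_bounded n m (Lt : R -> vec n -> vec m -> R) Lx B Bu :
  cont3R Lt -> cont3 Lx -> exists M1, 0 <= M1 /\
    forall t x u, in01 t -> vnorm x <= B -> vnorm u <= Bu -> gradtx_norm Lt Lx t x u <= M1.
Proof.
move=> Lt_cont Lx_cont.
have grad_cont : cont3R (fun t x u => Rabs (Lt t x u) + vnorm (Lx t x u)).
  move=> t x u t01 e e0.
  have [r1 [r10 h1]] := Lt_cont t x u t01 (e / 2) ltac:(lra).
  have [r2 [r20 h2]] := Lx_cont t x u t01 (e / 2) ltac:(lra).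
  exists (Rmin r1 r2); split; first exact: Rmin_pos.
  move=> s y v s01 near; have := h1 s y v s01 (Rlt_le_trans _ _ _ near (Rmin_l _ _)).
  have := h2 s y v s01 (Rlt_le_trans _ _ _ near (Rmin_r _ _)).
  have := Rabs_triang_inv (Lt s y v) (Lt t x u); have := Rabs_triang_inv (Lt t x u) (Lt s y v).
  have := vnorm_vsub_ge (Lx s y v) (Lx t x u); rewrite (Rabs_minus_sym (Lt t x u)).
  move=> ? ? ? ? ?; apply: Rabs_def1.
  + have := Rle_abs (vnorm (Lx s y v) - vnorm (Lx t x u)); lra.
  + by have := Rle_abs (- (vnorm (Lx s y v) - vnorm (Lx t x u))); rewrite Rabs_Ropp; lra.
have [M HM] := bounded_on_box B Bu grad_cont.
exists (Rabs M); split => [|t x u t01 xB uBu]; first exact: Rabs_pos.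
have := HM t x u t01 (cube_of_vnorm_le xB) (cube_of_vnorm_le uBu); have := Rle_abs M.
have := sqrt_sqr_add_le (Lt t x u) (dot_ge0 (Lx t x u)); rewrite /gradtx_norm /vnorm; lra.
Qed.

Lemma inOmega_lerp n cg c t (y : vec n) s z l :
  inOmega cg c t y -> inOmega cg c s z -> 0 <= l <= 1 -> inOmega cg c (lerp t s l) (vlerp y z l).
Proof.
move=> [t01 yc] [s01 zc] l01; split; first exact: in01_lerp.
rewrite (vnorm_ext (v := fun i => (1 - l) * y i + l * z i)) => [|i]; last by rewrite /vlerp /lerp; ring.
apply: Rle_trans (vnorm_lincomb _ _ _ _) _; rewrite !Rabs_pos_eq; nra.
Qed.

Lemma convex_weight_le i0 i1 i2 k : 0 < i2 -> i2 < k -> k <= i1 -> 2 * i2 <= i0 ->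
  (1 - (i0 - k) / (i0 - i2)) * i0 <= 2 * (i1 - i2).
Proof.
move=> i20 i2k ki1 i2i0.
have -> : (1 - (i0 - k) / (i0 - i2)) * i0 = (k - i2) * (i0 / (i0 - i2)) by field; lra.
have : i0 / (i0 - i2) <= 2.
  apply: (Rmult_le_reg_r (i0 - i2)); first lra.
  by rewrite /Rdiv Rmult_assoc Rinv_l; lra.
nra.
Qed.

(** * Lipschitz continuity of G *)

Lemma hausdorff_le_of_nearby n (A B : pt n -> Prop) r :
  (forall a, A a -> exists b, B b /\ pdist a b <= r) ->
  (forall b, B b -> exists a, A a /\ pdist b a <= r) -> hausdorff_le A B r.
Proof.
move=> AB BA; split=> [a Aa e e0|b Bb e e0].
  by have [b [Bb ab]] := AB a Aa; exists b; split => //; lra.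
have [a [Aa ba]] := BA b Bb; exists a; split => //.
by rewrite /pdist dist2C; rewrite /pdist in ba; lra.
Qed.

Section GrowthAlongSegment.
Variables (n m : nat) (L Lt : R -> vec n -> vec m -> R) (Lx : R -> vec n -> vec m -> vec n).
Variables (Lu : R -> vec n -> vec m -> vec m) (g gt : R -> vec n -> mat n m).
Variables (gx : R -> vec n -> 'I_n -> mat n m) (xi delta cdg : R).
Hypotheses (xi0 : 0 < xi) (delta0 : 0 <= delta) (cdg0 : 0 <= cdg).
Hypothesis L_fr : forall t x u, in01 t -> L_frechet L Lt Lx Lu t x u.
Hypothesis L_pos : forall t x u, in01 t -> 0 < L t x u.
Hypothesis g_C1gt : g_C1 g gt gx.
Hypothesis Dg_bound : forall t x ht hx, in01 t ->
  opnorm_le (Dg gt gx t x ht hx) (cdg * sqrt (ht * ht + dot hx hx)).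
Hypothesis C3 : forall t x u, in01 t ->
  gradtx_norm Lt Lx t x u * vnorm (mulmv (g t x) u) <= xi * L t x u + delta.
Variables (t s : R) (y z : vec n) (w : vec m).
Hypotheses (t01 : in01 t) (s01 : in01 s).

Let phi l := L (lerp t s l) (vlerp y z l) w.
Let gam := vnorm (mulmv (g t y) w).
Let D := dist2 t y s z.
Hypothesis g_large : 2 * (cdg * D * vnorm w) <= gam.

Lemma gradtx_norm_lerp_le c : 0 <= c <= 1 ->
  gradtx_norm Lt Lx (lerp t s c) (vlerp y z c) w * (gam / 2) <= xi * phi c + delta.
Proof.
move=> c01; have tc01 := in01_lerp t01 s01 c01.
set gc := mulmv (g (lerp t s c) (vlerp y z c)) w.
have gc_gam : gam / 2 <= vnorm gc.
  have := g_lipschitz g_C1gt Dg_bound y (vlerp y z c) w t01 tc01 cdg0.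
  rewrite dist2_lerp0 // -/gc -/D => hgc.
  have := vnorm_vsub_ge (mulmv (g t y) w) gc; rewrite vnorm_vsubC -/gam.
  have : cdg * (c * D) * vnorm w <= cdg * D * vnorm w.
    apply: Rmult_le_compat_r (vnorm_ge0 w) _; apply: Rmult_le_compat_l cdg0 _.
    have := dist2_ge0 t y s z; rewrite -/D; nra.
  have := Rle_abs (gam - vnorm gc); lra.
have := C3 (vlerp y z c) w tc01; rewrite -/gc.
have := gradtx_norm_ge0 Lt Lx (lerp t s c) (vlerp y z c) w; rewrite /phi; nra.
Qed.

Lemma L_lerp_le c : 0 <= c <= 1 -> 4 * xi * D <= gam -> 0 < gam ->
  xi * phi c <= 2 * xi * phi 0 + delta.
Proof.
move=> c01 gam_D gam0.
have phi_cont l : 0 <= l <= 1 -> continuity_pt phi l.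
  move=> l01; apply: derivable_continuous_pt.
  exact: exist _ _ (L_lerp_derivable L_fr y z w t01 s01 l01).
have [cm [phi_max cm01]] := continuity_ab_maj phi 0 1 Rle_0_1 phi_cont.
have [c1 [c101 hc1]] := L_lerp_MVT L_fr y z w t01 s01 (a := 0) (b := cm) ltac:(lra) cm01.
rewrite lerp0 vlerp0 Rminus_0_r -/D in hc1.
set G1 := gradtx_norm _ _ _ _ _ in hc1; set Mx := phi cm.
have G10 : 0 <= G1 := gradtx_norm_ge0 _ _ _ _ _.
have Mx0 : 0 < Mx by apply: L_pos; exact: in01_lerp.
have phi0 : phi 0 = L t y w by rewrite /phi lerp0 vlerp0.
have GD0 : 0 <= G1 * D by apply: Rmult_le_pos => //; exact: dist2_ge0.
have rise : Mx - phi 0 <= G1 * D.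
  rewrite (Rabs_pos_eq cm) in hc1; last lra.
  have := Rle_abs (Mx - phi 0); rewrite phi0 /Mx /phi; nra.
have G1_gam : G1 * (gam / 2) <= xi * Mx + delta.
  by have := gradtx_norm_lerp_le c101; have := phi_max c1 c101; rewrite -/G1 -/Mx; nra.
(* by (C3) the rise of L up to its maximum [Mx] is controlled by [Mx] itself;
   as [4 xi D <= gam], this bounds [Mx] *)
have : xi * Mx * gam <= (2 * xi * phi 0 + delta) * gam.
  have := dist2_ge0 t y s z; rewrite -/D => D0.
  have h1 : (Mx - phi 0) * gam <= 2 * D * (xi * Mx + delta) by nra.
  have h2 : 2 * D * xi * Mx <= Mx * gam / 2 by nra.
  have h3 : 4 * xi * D * delta <= gam * delta by apply: Rmult_le_compat_r.
  nra.
move=> /(Rmult_le_reg_r _ _ _ gam0).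
have := phi_max c c01; rewrite -/Mx; nra.
Qed.

Lemma L_increment_bound : 4 * xi * D <= gam -> 0 < gam ->
  (L s z w - L t y w) * gam <= 4 * (xi * L t y w + delta) * D.
Proof.
move=> gam_D gam0.
have [c [c01 hc]] := L_lerp_MVT L_fr y z w t01 s01 (a := 0) (b := 1) ltac:(lra) ltac:(lra).
rewrite lerp0 lerp1 vlerp0 vlerp1 Rminus_0_r Rabs_R1 Rmult_1_r -/D in hc.
have phi0 : phi 0 = L t y w by rewrite /phi lerp0 vlerp0.
have := gradtx_norm_lerp_le c01; have := L_lerp_le c01 gam_D gam0; rewrite phi0.
have := Rle_abs (L s z w - L t y w); have := dist2_ge0 t y s z; rewrite -/D.
set G := gradtx_norm _ _ _ _ _ in hc *; nra.
Qed.

End GrowthAlongSegment.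

Section HausdorffLipschitz.
Variables (n m : nat) (L Lt : R -> vec n -> vec m -> R) (Lx : R -> vec n -> vec m -> vec n).
Variables (Lu : R -> vec n -> vec m -> vec m) (g gt : R -> vec n -> mat n m).
Variables (gx : R -> vec n -> 'I_n -> mat n m) (beta xi delta cg cdg r0 c M0 M1 W : R).
Hypotheses (beta0 : 0 < beta) (xi0 : 0 < xi) (delta0 : 0 <= delta).
Hypotheses (cg0 : 0 <= cg) (cdg0 : 0 <= cdg) (r00 : 0 <= r0).
Hypothesis L_fr : forall t x u, in01 t -> L_frechet L Lt Lx Lu t x u.
Hypothesis L_pos : forall t x u, in01 t -> 0 < L t x u.
Hypothesis L_coercive : forall t x u, in01 t -> r0 <= vnorm u -> vnorm u <= L t x u.
Hypothesis g_C1gt : g_C1 g gt gx.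
Hypothesis g_bound : forall t x, in01 t -> opnorm_le (g t x) cg.
Hypothesis Dg_bound : forall t x ht hx, in01 t ->
  opnorm_le (Dg gt gx t x ht hx) (cdg * sqrt (ht * ht + dot hx hx)).
Hypothesis C3 : forall t x u, in01 t ->
  gradtx_norm Lt Lx t x u * vnorm (mulmv (g t x) u) <= xi * L t x u + delta.
Hypothesis M0_bound : forall t x, inOmega cg c t x -> L t x (fun _ => 0) <= M0.
Hypothesis M1_bound : forall t x u, inOmega cg c t x -> vnorm u <= W -> gradtx_norm Lt Lx t x u <= M1.
Hypotheses (M10 : 0 <= M1) (W_r0 : r0 <= W) (W_M0 : 2 * M0 + beta <= W).
Hypothesis G_convex : forall s z, in01 s -> convex_set (Gset L g beta s z).

Definition w_ratio := r0 / beta + 1.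
Definition L_ratio := xi + delta / beta.
Definition A_cut := 2 * cdg + 4 * xi / beta + 1.
Definition K_rescaled := cdg * w_ratio.
Definition K_same_control := M1 / (beta * beta) * (1 + cg * W) + cdg * W / beta.
Definition K_mixed := 8 * L_ratio / beta + 8 * cdg * L_ratio / beta + cdg * w_ratio.
Definition K_G := K_rescaled + K_same_control + A_cut + K_mixed.

Lemma w_ratio_ge0 : 0 <= w_ratio.
Proof. by have := Rdiv_le_0_compat r00 beta0; rewrite /w_ratio; lra. Qed.

Lemma L_ratio_ge0 : 0 <= L_ratio.
Proof. by have := Rdiv_le_0_compat delta0 beta0; rewrite /L_ratio; lra. Qed.

Lemma K_G_ge : 0 <= K_rescaled /\ 0 <= K_same_control /\ 1 <= A_cut /\ 0 <= K_mixed.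
Proof.
have ib : 0 < / beta by apply: Rinv_0_lt_compat.
have ib2 : 0 < / (beta * beta) by apply: Rinv_0_lt_compat; nra.
have := w_ratio_ge0; have := L_ratio_ge0 => Lr wr.
rewrite /K_rescaled /K_same_control /A_cut /K_mixed /Rdiv; split; first nra.
split; first by apply: Rplus_le_le_0_compat; apply: Rmult_le_pos; nra.
split; first nra.
by apply: Rplus_le_le_0_compat; [apply: Rplus_le_le_0_compat|]; repeat apply: Rmult_le_pos; lra.
Qed.

Lemma K_G_ge0 : 0 <= K_G.
Proof. by have := K_G_ge; rewrite /K_G; lra. Qed.

Lemma vnorm_le_w_ratio t y w : in01 t -> vnorm w <= w_ratio * (L t y w + beta).
Proof.
move=> t01; have L0 := L_pos y w t01.
have -> : w_ratio * (L t y w + beta) = r0 * L t y w / beta + r0 + L t y w + beta.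
  by rewrite /w_ratio; field; lra.
have : 0 <= r0 * L t y w / beta by apply: Rdiv_le_0_compat => //; nra.
case: (Rle_or_lt r0 (vnorm w)) => [/(L_coercive y t01)|]; lra.
Qed.

Lemma xiL_le_L_ratio t y w : in01 t -> xi * L t y w + delta <= L_ratio * (L t y w + beta).
Proof.
move=> t01; have L0 := L_pos y w t01.
have -> : L_ratio * (L t y w + beta) = xi * L t y w + xi * beta + delta * L t y w / beta + delta.
  by rewrite /L_ratio; field; lra.
have : 0 <= delta * L t y w / beta by apply: Rdiv_le_0_compat => //; nra.
nra.
Qed.

Section Step.
Variables (t s : R) (y z : vec n) (rho : R) (w : vec m).
Hypotheses (Oty : inOmega cg c t y) (Osz : inOmega cg c s z) (rho01 : 0 <= rho <= 1).

Local Notation l1 := (L t y w + beta).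
Local Notation l2 := (L s z w + beta).
Local Notation k1 := (rho / l1).
Local Notation G1 := (mulmv (g t y) w).
Local Notation G2 := (mulmv (g s z) w).
Local Notation D := (dist2 t y s z).

Let t01 : in01 t := Oty.1.
Let s01 : in01 s := Osz.1.
Let l1_beta : beta < l1. Proof. by have := L_pos y w t01; lra. Qed.
Let l2_beta : beta < l2. Proof. by have := L_pos z w s01; lra. Qed.
Let k1_l1 : k1 * l1 = rho. Proof. by field; lra. Qed.
Let k1_0 : 0 <= k1. Proof. by apply: Rdiv_le_0_compat; lra. Qed.
Let D0 : 0 <= D. Proof. exact: dist2_ge0. Qed.

Lemma pdist_Gpoint_le k' (V : vec n) :
  pdist (Gpoint L g beta t y rho w) (k', V) <= Rabs (k' - k1) + vnorm (vsub V (fun i => k1 * G1 i)).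
Proof. by rewrite GpointE; exact: pdist_le. Qed.

Lemma G2_G1_le : vnorm (vsub G2 G1) <= cdg * D * vnorm w.
Proof. exact: (g_lipschitz g_C1gt Dg_bound y z w t01 s01 cdg0). Qed.

Lemma shift_g_le : k1 * vnorm (vsub G2 G1) <= K_rescaled * D.
Proof.
have wr0 := w_ratio_ge0.
have kw : k1 * vnorm w <= w_ratio * rho.
  have := Rmult_le_compat_l _ _ _ k1_0 (vnorm_le_w_ratio y w t01).
  have -> : k1 * (w_ratio * l1) = w_ratio * (k1 * l1) by ring.
  by rewrite k1_l1.
apply: Rle_trans (Rmult_le_compat_l _ _ _ k1_0 G2_G1_le) _.
have cD := Rmult_le_pos _ _ cdg0 D0.
have := Rmult_le_compat_l _ _ _ cD kw; have := Rmult_le_pos _ _ cD wr0.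
rewrite /K_rescaled; nra.
Qed.

Lemma nearby_point_rescaled : rho * l2 <= l1 ->
  exists b, Gset L g beta s z b /\ pdist (Gpoint L g beta t y rho w) b <= K_rescaled * D.
Proof.
move=> shrink; exists (Gpoint L g beta s z (rho * l2 / l1) w); split.
  apply: Gset_Gpoint; split; first by apply: Rdiv_le_0_compat; nra.
  by apply: (Rmult_le_reg_r l1); [lra|rewrite /Rdiv Rmult_assoc Rinv_l; lra].
rewrite [Gpoint _ _ _ s _ _ _]GpointE -/G2.
have -> : rho * l2 / l1 / l2 = k1 by field; lra.
apply: Rle_trans (pdist_Gpoint_le _ _) _; rewrite Rminus_diag Rabs_R0 Rplus_0_l.
rewrite (vnorm_ext (v := fun i => k1 * vsub G2 G1 i)) => [|i]; last by rewrite /vsub; ring.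
by rewrite vnorm_scal Rabs_pos_eq //; exact: shift_g_le.
Qed.

Lemma nearby_point_same_control : vnorm w <= W ->
  exists b, Gset L g beta s z b /\ pdist (Gpoint L g beta t y rho w) b <= K_same_control * D.
Proof.
move=> wW; exists (Gpoint L g beta s z rho w); split; first exact: Gset_Gpoint.
rewrite !GpointE .
apply: Rle_trans (pdist_scaled_le _ _ _ _) _.
have dL : Rabs (L s z w - L t y w) <= M1 * D.
  apply: (L_lipschitz_tx L_fr t01 s01) => c' c'01.
  exact: M1_bound (inOmega_lerp Oty Osz c'01) wW.
have dk : Rabs (rho / l2 - k1) <= M1 * D / (beta * beta).
  apply: Rle_trans (Rdiv_diff_le rho beta0 (Rlt_le _ _ l1_beta) (Rlt_le _ _ l2_beta) rho01) _.
  rewrite Rminus_diag Rabs_R0 /Rdiv Rmult_0_l Rplus_0_l.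
  have -> : l2 - l1 = L s z w - L t y w by ring.
  by apply: Rmult_le_compat_r; [apply: Rlt_le; apply: Rinv_0_lt_compat; nra|].
have k1_le : Rabs k1 <= / beta.
  rewrite Rabs_pos_eq // /k1 /Rdiv.
  have := Rinv_le_contravar _ _ beta0 (Rlt_le _ _ l1_beta).
  have := Rinv_0_lt_compat l1 ltac:(lra); nra.
have G2W : vnorm G2 <= cg * W.
  apply: Rle_trans (@g_bound s z s01 w) _; exact: Rmult_le_compat_l cg0 wW.
have dG : vnorm (vsub G2 G1) <= cdg * D * W.
  exact: Rle_trans G2_G1_le (Rmult_le_compat_l _ _ _ (Rmult_le_pos _ _ cdg0 D0) wW).
have := Rmult_le_compat _ _ _ _ (Rabs_pos _) (Rplus_le_le_0_compat _ _ Rle_0_1 (vnorm_ge0 _)) dk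
  (Rplus_le_compat_l 1 _ _ G2W).
have := Rmult_le_compat _ _ _ _ (Rabs_pos _) (vnorm_ge0 _) k1_le dG.
have -> : K_same_control * D = M1 * D / (beta * beta) * (1 + cg * W) + / beta * (cdg * D * W).
  by rewrite /K_same_control; field; lra.
lra.
Qed.

Lemma nearby_point_zero_control : L s z (fun _ => 0) <= L t y w -> vnorm G1 <= A_cut * D * l1 ->
  exists b, Gset L g beta s z b /\ pdist (Gpoint L g beta t y rho w) b <= A_cut * D.
Proof.
move=> L0_L1 G1_small; set l0 := L s z (fun _ => 0) + beta.
have l0_pos : 0 < l0 by have := L_pos z (fun _ => 0) s01; rewrite /l0; lra.
exists (Gpoint L g beta s z (k1 * l0) (fun _ => 0)); split.
  apply: Gset_Gpoint; split; first by apply: Rmult_le_pos; lra.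
  have : k1 * l0 <= k1 * l1 by apply: Rmult_le_compat_l => //; rewrite /l0; lra.
  lra.
rewrite [Gpoint _ _ _ s _ _ _]GpointE -/l0.
have -> : k1 * l0 / l0 = k1 by field; lra.
apply: Rle_trans (pdist_Gpoint_le _ _) _; rewrite Rminus_diag Rabs_R0 Rplus_0_l.
rewrite (vnorm_ext (v := fun i => - k1 * G1 i)) => [|i]; last by rewrite /vsub mulmv0; ring.
rewrite vnorm_scal Rabs_Ropp Rabs_pos_eq //.
apply: Rle_trans (Rmult_le_compat_l _ _ _ k1_0 G1_small) _.
have -> : k1 * (A_cut * D * l1) = rho * (A_cut * D) by field; lra.
have AD0 : 0 <= A_cut * D by apply: Rmult_le_pos => //; have := K_G_ge; lra.
nra.
Qed.

Lemma mixed_spread_le : W < vnorm w -> l1 < rho * l2 -> A_cut * D * l1 < vnorm G1 ->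
  2 * ((L s z w - L t y w) / (l1 * l2)) * (vnorm G1 + cdg * D * L t y w)
  <= (8 * L_ratio / beta + 8 * cdg * L_ratio / beta) * D.
Proof.
move=> Ww l1_l2 G1_big.
have [KS [KB [A1 KM]]] := K_G_ge.
have wL1 : vnorm w <= L t y w by apply: L_coercive => //; lra.
have L12 : L t y w < L s z w by nra.
have AD0 : 0 <= A_cut * D * l1 by apply: Rmult_le_pos; [apply: Rmult_le_pos|]; lra.
have gam0 : 0 < vnorm G1 by lra.
have xi_beta : 0 <= 4 * xi / beta by apply: Rdiv_le_0_compat; lra.
have gam_xi : 4 * xi * D <= vnorm G1.
  have : 4 * xi / beta * D * l1 <= A_cut * D * l1.
    by apply: Rmult_le_compat_r; [lra|apply: Rmult_le_compat_r => //; rewrite /A_cut; lra].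
  have -> : 4 * xi / beta * D * l1 = 4 * xi * D + 4 * xi * D * L t y w / beta by field; lra.
  have : 0 <= 4 * xi * D * L t y w / beta.
    apply: Rdiv_le_0_compat => //; have := L_pos y w t01.
    have := Rmult_le_pos _ _ (Rlt_le _ _ xi0) D0; nra.
  lra.
have gam_cdg : 2 * (cdg * D * vnorm w) <= vnorm G1.
  have : 2 * cdg * D * l1 <= A_cut * D * l1.
    by apply: Rmult_le_compat_r; [lra|apply: Rmult_le_compat_r => //; rewrite /A_cut; lra].
  have : cdg * D * vnorm w <= cdg * D * l1.
    by apply: Rmult_le_compat_l; [exact: Rmult_le_pos|lra].
  lra.
have growth :=
  L_increment_bound xi0 delta0 cdg0 L_fr L_pos g_C1gt Dg_bound C3 t01 s01 gam_cdg gam_xi gam0.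
have growth' : (L s z w - L t y w) * vnorm G1 <= 4 * (L_ratio * l1) * D.
  apply: Rle_trans growth _; apply: (Rmult_le_compat_r _ _ _ D0).
  by apply: Rmult_le_compat_l; [lra|exact: xiL_le_L_ratio].
have D_pos : 0 < D.
  case: (Rle_lt_or_eq_dec _ _ D0) => // D_0; rewrite -D_0 Rmult_0_r in growth'; nra.
have jump : L s z w - L t y w <= 4 * L_ratio.
  have Dl1 : 0 < D * l1 by apply: Rmult_lt_0_compat; lra.
  apply: (Rmult_le_reg_r (D * l1)) => //.
  have : 1 * (D * l1) <= A_cut * (D * l1) by apply: Rmult_le_compat_r; lra.
  have : (L s z w - L t y w) * (A_cut * D * l1) <= (L s z w - L t y w) * vnorm G1.
    by apply: Rmult_le_compat_l; lra.
  have -> : 4 * L_ratio * (D * l1) = 4 * (L_ratio * l1) * D by ring.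
  nra.
have i12 : / (l1 * l2) <= / l1 * / beta.
  rewrite Rinv_mult; apply: Rmult_le_compat_l; first by apply: Rlt_le; apply: Rinv_0_lt_compat; lra.
  apply: Rinv_le_contravar => //; lra.
have q0 : 0 <= / (l1 * l2) by apply: Rlt_le; apply: Rinv_0_lt_compat; nra.
set X := L s z w - L t y w in growth' jump *.
have X0 : 0 <= X by rewrite /X; lra.
have part_a : / (l1 * l2) * (X * vnorm G1) <= 4 * L_ratio * D / beta.
  apply: Rle_trans (Rmult_le_compat _ _ _ _ q0 (Rmult_le_pos _ _ X0 (vnorm_ge0 _)) i12 growth') _.
  by right; field; lra.
have part_b : / (l1 * l2) * (X * (cdg * D * L t y w)) <= 4 * L_ratio * cdg * D / beta.
  have cDL : 0 <= cdg * D * L t y w by apply: Rmult_le_pos; [nra|have := L_pos y w t01; lra].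
  have := Rmult_le_compat _ _ _ _ q0 (Rmult_le_pos _ _ X0 cDL) i12 (Rmult_le_compat_r _ _ _ cDL jump).
  have -> : / l1 * / beta * (4 * L_ratio * (cdg * D * L t y w))
      = 4 * L_ratio * cdg * D / beta * (L t y w / l1) by field; lra.
  have : L t y w / l1 <= 1.
    by apply: (Rmult_le_reg_r l1); [lra|rewrite /Rdiv Rmult_assoc Rinv_l; lra].
  have : 0 <= 4 * L_ratio * cdg * D / beta.
    apply: Rdiv_le_0_compat => //; have := L_ratio_ge0; have := Rmult_le_pos _ _ cdg0 D0; nra.
  nra.
have -> : 2 * (X / (l1 * l2)) * (vnorm G1 + cdg * D * L t y w)
    = 2 * (/ (l1 * l2) * (X * vnorm G1) + / (l1 * l2) * (X * (cdg * D * L t y w))) by rewrite /Rdiv; ring.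
have -> : (8 * L_ratio / beta + 8 * cdg * L_ratio / beta) * D
    = 2 * (4 * L_ratio * D / beta + 4 * L_ratio * cdg * D / beta) by rewrite /Rdiv; ring.
lra.
Qed.

Lemma nearby_point_mixed : W < vnorm w -> l1 < rho * l2 -> A_cut * D * l1 < vnorm G1 ->
  exists b, Gset L g beta s z b /\ pdist (Gpoint L g beta t y rho w) b <= K_mixed * D.
Proof.
move=> Ww l1_l2 G1_big; have spread := mixed_spread_le Ww l1_l2 G1_big.
set l0 := L s z (fun _ => 0) + beta.
have L0M0 := M0_bound Osz.
have wL1 : vnorm w <= L t y w by apply: L_coercive => //; lra.
have wL2 : vnorm w <= L s z w by apply: L_coercive => //; lra.
have l0_pos : 0 < l0 by have := L_pos z (fun _ => 0) s01; rewrite /l0; lra.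
have i21 : / l2 < k1.
  apply: (Rmult_lt_reg_r (l1 * l2)); first nra.
  have -> : / l2 * (l1 * l2) = l1 by field; lra.
  by have -> : k1 * (l1 * l2) = rho * l2 by field; lra.
have k1_i1 : k1 <= / l1.
  by rewrite /Rdiv; have := Rinv_0_lt_compat l1 ltac:(lra); nra.
have i0_2i2 : 2 * / l2 <= / l0.
  have -> : 2 * / l2 = / (l2 / 2) by field; lra.
  by apply: Rinv_le_contravar => //; rewrite /l0; lra.
have i1_i0 : / l1 <= / l0 by apply: Rinv_le_contravar => //; rewrite /l0; lra.
have i2_0 : 0 < / l2 by apply: Rinv_0_lt_compat; lra.
set th := (/ l0 - k1) / (/ l0 - / l2).
have th01 : 0 <= th <= 1.
  split; first by apply: Rdiv_le_0_compat; lra.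
  by apply: (Rmult_le_reg_r (/ l0 - / l2)); [lra|rewrite /th /Rdiv Rmult_assoc Rinv_l; lra].
have th_k1 : th * / l2 + (1 - th) * / l0 = k1.
  have : th * (/ l0 - / l2) = / l0 - k1 by rewrite /th /Rdiv Rmult_assoc Rinv_l; [ring|lra].
  lra.
have weight := convex_weight_le i2_0 i21 k1_i1 i0_2i2; rewrite -/th in weight.
have := G_convex s01 (Gset_Gpoint L g beta s z w (conj Rle_0_1 (Rle_refl 1)))
  (Gset_Gpoint L g beta s z (fun _ => 0) (conj Rle_0_1 (Rle_refl 1))) th01.
set b := (_, _) => bG; exists b; split => //.
apply: Rle_trans (pdist_Gpoint_le _ _) _.
have -> : b.1 - k1 = 0 by rewrite /b /Gpoint /= -/l0 -th_k1 /Rdiv; ring.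
rewrite Rabs_R0 Rplus_0_l.
rewrite (vnorm_ext (v := fun i => - ((1 - th) * / l0) * G2 i + k1 * vsub G2 G1 i)); last first.
  move=> i; rewrite /b /Gpoint /vsub /= -/l0 mulmv0 -th_k1 /Rdiv; ring.
apply: Rle_trans (vnorm_lincomb _ _ _ _) _.
rewrite Rabs_Ropp !Rabs_pos_eq //; last by apply: Rmult_le_pos; lra.
have G2_le : vnorm G2 <= vnorm G1 + cdg * D * L t y w.
  have := vnorm_vsub_triangle G2 G1 (fun _ => 0); rewrite !vnorm_vsub0.
  have := G2_G1_le.
  have : cdg * D * vnorm w <= cdg * D * L t y w by apply: Rmult_le_compat_l => //; exact: Rmult_le_pos.
  lra.
have wt0 : 0 <= (1 - th) / l0 by apply: Rdiv_le_0_compat; lra.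
have := Rmult_le_compat _ _ _ _ wt0 (vnorm_ge0 G2) weight G2_le.
have := shift_g_le.
have -> : 2 * (/ l1 - / l2) = 2 * ((L s z w - L t y w) / (l1 * l2)) by field; lra.
rewrite /K_mixed /K_rescaled; lra.
Qed.

Lemma nearby_point :
  exists b, Gset L g beta s z b /\ pdist (Gpoint L g beta t y rho w) b <= K_G * D.
Proof.
have [KS [KB [A1 KM]]] := K_G_ge.
have KD (K K' : R) b : 0 <= K' -> pdist (Gpoint L g beta t y rho w) b <= K' * D ->
    K' <= K -> pdist (Gpoint L g beta t y rho w) b <= K * D.
  by move=> K'0 hb K'K; apply: Rle_trans hb _; apply: Rmult_le_compat_r.
case: (Rle_or_lt (rho * l2) l1) => [shrink|grow].
  have [b [bG hb]] := nearby_point_rescaled shrink; exists b; split => //.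
  by apply: KD hb _ => //; rewrite /K_G; lra.
case: (Rle_or_lt (vnorm w) W) => [wW|Ww].
  have [b [bG hb]] := nearby_point_same_control wW; exists b; split => //.
  by apply: KD hb _ => //; rewrite /K_G; lra.
case: (Rle_or_lt (vnorm G1) (A_cut * D * l1)) => [G1_small|G1_big].
  have L0_L1 : L s z (fun _ => 0) <= L t y w.
    have := M0_bound Osz; have := L_coercive y t01 (Rlt_le _ _ (Rle_lt_trans _ _ _ W_r0 Ww)).
    lra.
  have [b [bG hb]] := nearby_point_zero_control L0_L1 G1_small; exists b; split => //.
  by apply: KD hb _; [lra|rewrite /K_G; lra].
have [b [bG hb]] := nearby_point_mixed Ww grow G1_big; exists b; split => //.
by apply: KD hb _ => //; rewrite /K_G; lra.
Qed.

End Step.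

End HausdorffLipschitz.

Unset Implicit Arguments.

(* About beta, only beta > delta / xi > 0 is used. *)
Theorem lemma1
  (n m : nat) (Hn : (0 < n)%N) (Hm : (0 < m)%N)
  (L : R -> vec n -> vec m -> R)
  (Lt : R -> vec n -> vec m -> R) (Lx : R -> vec n -> vec m -> vec n)
  (Lu : R -> vec n -> vec m -> vec m)
  (HL : L_C1 L Lt Lx Lu)
  (g : R -> vec n -> mat n m)
  (gt : R -> vec n -> mat n m) (gx : R -> vec n -> 'I_n -> mat n m)
  (Hg : g_C1 g gt gx)
  (* (C1) *)
  (theta : R -> R)
  (HC1a : forall t x u, in01 t -> L t x u >= theta (vnorm u))
  (HC1b : forall r, 0 <= r -> theta r > 0)
  (HC1c : forall eps, 0 < eps -> exists R0, forall r, r >= R0 -> Rabs (r / theta r) < eps)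
  (* (C2) *)
  (mu : R) (Hmu : mu > 0)
  (HC2 : forall t x u v, in01 t ->
     L t x u + dot (Lu t x u) (vsub v u) + mu / 2 * (vnorm (vsub v u) * vnorm (vsub v u))
     <= L t x v)
  (* (C3) *)
  (xi delta : R) (Hxi : xi > 0) (Hdelta : delta > 0)
  (HC3 : forall t x u, in01 t ->
     sqrt (Lt t x u * Lt t x u + dot (Lx t x u) (Lx t x u)) * vnorm (mulmv (g t x) u)
     <= xi * L t x u + delta)
  (* (C4) *)
  (cg cdg : R) (Hcg : cg > 0) (Hcdg : cdg > 0)
  (HC4a : forall t x, in01 t -> opnorm_le (g t x) cg)
  (HC4b : forall t x ht hx, in01 t ->
     opnorm_le (Dg gt gx t x ht hx) (cdg * sqrt (ht * ht + dot hx hx)))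
  (* constants *)
  (r0 : R) (Hr0 : r0 > 0) (Hr0th : forall r, r >= r0 -> theta r >= r)
  (HLint : Riemann_integrable (fun t => L t (@vzero n) (@vzero m)) 0 1)
  (c : R) (Hc : c = r0 + RiemannInt HLint)
  (T0 : R) (HT0 : 0 < T0 < 1)
  (beta : R)
  (Hbeta_max :
     (exists t x u, in01 t /\ vnorm x <= cg * c /\ vnorm u <= (c + 1) / T0 /\
        dot (Lu t x u) u - L t x u = beta) /\
     (forall t x u, in01 t -> vnorm x <= cg * c -> vnorm u <= (c + 1) / T0 ->
        dot (Lu t x u) u - L t x u <= beta))
  (Hbeta : beta > delta / xi) :
  (forall t y, in01 t ->
     nonempty_set (Gset L g beta t y) /\
     convex_set (Gset L g beta t y) /\
     compact_set (Gset L g beta t y)) /\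
  (exists K, 0 <= K /\
     forall t y s z, inOmega cg c t y -> inOmega cg c s z ->
       hausdorff_le (Gset L g beta t y) (Gset L g beta s z) (K * dist2 t y s z)).

Proof.
have beta0 : 0 < beta.
  have : 0 < delta / xi by apply: Rdiv_lt_0_compat; lra.
  lra.
have L_pos t x u : in01 t -> 0 < L t x u.
  by move=> t01; have := HC1a t x u t01; have := HC1b (vnorm u) (vnorm_ge0 u); lra.
have L_coercive t x u : in01 t -> r0 <= vnorm u -> vnorm u <= L t x u.
  by move=> t01 r0u; have := HC1a t x u t01; have := Hr0th (vnorm u) (Rle_ge _ _ r0u); lra.
have L0 t x u : in01 t -> 0 <= L t x u by move=> t01; exact/Rlt_le/L_pos.
have G_convex t y : in01 t -> convex_set (Gset L g beta t y).
  move=> t01; apply: Gset_convex => [w|w1 w2 a b a0 b0 ab]; first by have := L_pos t y w t01; lra.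
  exact: L_convex (Rlt_le _ _ Hmu) (fun u v => HC2 t y u v t01) a0 b0 ab.
split=> [t y t01|].
  split; first by exists (0, fun _ => 0); exact: Gset_origin.
  split; first exact: G_convex.
  apply: (Gset_compact beta0 Hcg (fun w => L0 t y w t01) (HC4a t y t01)
    (fun w => HC1a t y w t01) HC1b HC1c Hr0th (fun w => HL.1 t y w t01)).
have [M0 M0_bound] := L0_bounded (cg * c) HL.1.
set W := r0 + 2 * Rabs M0 + beta + 1.
have W_r0 : r0 <= W by have := Rabs_pos M0; rewrite /W; lra.
have W_M0 : 2 * M0 + beta <= W by have := Rle_abs M0; have := Rabs_pos M0; rewrite /W; lra.
have [M1 [M10 M1_bound]] := gradtx_norm_bounded (cg * c) W HL.2.1 HL.2.2.1.
have nearby := nearby_point beta0 Hxi (Rlt_le _ _ Hdelta) (Rlt_le _ _ Hcg) (Rlt_le _ _ Hcdg)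
  (Rlt_le _ _ Hr0) HL.1 L_pos L_coercive Hg HC4a HC4b HC3
  (fun t x Ox => M0_bound t x Ox.1 Ox.2) (fun t x u Ox => M1_bound t x u Ox.1 Ox.2) M10 W_r0 W_M0 G_convex.
exists (K_G beta xi delta cg cdg r0 M1 W); split.
  exact: K_G_ge0 beta0 Hxi (Rlt_le _ _ Hdelta) (Rlt_le _ _ Hcg) (Rlt_le _ _ Hcdg) (Rlt_le _ _ Hr0) M10 W_r0.
move=> t y s z Oty Osz; apply: hausdorff_le_of_nearby => _ /GsetP [rho [w [rho01 ->]]].
  exact: nearby t s y z rho w Oty Osz rho01.
by rewrite dist2C; exact: nearby s t z y rho w Osz Oty rho01.
Qed.
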